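(* Let $X$ be a real Banach space, let $g:X^*\to(-\infty,+\infty]$ be a proper convex weak$^*$-lower semicontinuous function, and let $T:X^*\to2^X$ be a set-valued operator with $\mathrm{Gr}\,T\subset\mathrm{Gr}\,\partial g$, i.e. $T(x^* )\subset\partial g(x^* )\cap X$ for all $x^*$. Let $x_0^*\in D(T)$ and define $$h(x^* )=\sup\Big\{\sum_{i=0}^{n-1}\langle x_i,x_{i+1}^*-x_i^*\rangle+\langle x_n,x^*-x_n^*\rangle\Big\},\quad x^*\in X^*,$$ the supremum being over all integers $n\ge0$, all $x_1^*,\dots,x_n^*\in X^*$ and all $x_i\in T(x_i^* )$, $i=0,\dots,n$. Then: (i) if $\operatorname{int}(\operatorname{dom} g)\ne\emptyset$ and $D(T)$ is dense in $\operatorname{int}(\operatorname{dom} g)$, then $g(x^* )-g(x_0^* )=h(x^* )$ for all $x^*\in\operatorname{dom} g$; (ii) if $\operatorname{int}(\operatorname{dom}(g^*|_X))\ne\emptyset$ and $\operatorname{Im}T=\bigcup_{x^*}T(x^* )$ is dense in $\operatorname{int}(\operatorname{dom}(g^*|_X))$, then $g(x^* )-g(x_0^* )=h(x^* )$ for all $x^*\in X^*$.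
   Context: $X$ is identified with its canonical image in $X^{**}$; $\partial g(x^* )\cap X=\{x\in X:\langle y^*-x^*,x\rangle\le g(y^* )-g(x^* )\ \forall y^*\in X^*\}$ for $x^*\in\operatorname{dom} g=\{g<+\infty\}$. $D(T)=\{x^*:T(x^* )\ne\emptyset\}$, $\mathrm{Gr}\,T=\{(x^*,x):x\in T(x^* )\}$. $g^*|_X(x)=\sup_{x^*\in X^*}(\langle x^*,x\rangle-g(x^* ))$ for $x\in X$. Interiors and density are with respect to the norm topologies of $X^*$ and $X$ respectively. *)

From Stdlib Require Import Reals Lra.
Open Scope R_scope.

Record Banach := {
  car :> Type;
  vzero : car;
  vadd : car -> car -> car;
  vopp : car -> car;
  vscal : R -> car -> car;
  vnorm : car -> R;
  vadd_assoc : forall x y z, vadd x (vadd y z) = vadd (vadd x y) z;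
  vadd_comm : forall x y, vadd x y = vadd y x;
  vadd_0 : forall x, vadd x vzero = x;
  vadd_opp : forall x, vadd x (vopp x) = vzero;
  vscal_1 : forall x, vscal 1 x = x;
  vscal_assoc : forall a b x, vscal a (vscal b x) = vscal (a * b) x;
  vscal_distr_v : forall a x y, vscal a (vadd x y) = vadd (vscal a x) (vscal a y);
  vscal_distr_s : forall a b x, vscal (a + b) x = vadd (vscal a x) (vscal b x);
  vnorm_nonneg : forall x, 0 <= vnorm x;
  vnorm_eq0 : forall x, vnorm x = 0 -> x = vzero;
  vnorm_scal : forall a x, vnorm (vscal a x) = Rabs a * vnorm x;
  vnorm_triangle : forall x y, vnorm (vadd x y) <= vnorm x + vnorm y;
  vcomplete : forall u : nat -> car,
    (forall eps, 0 < eps -> exists N, forall m n, (N <= m)%nat -> (N <= n)%nat ->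
        vnorm (vadd (u m) (vopp (u n))) < eps) ->
    exists l, forall eps, 0 < eps -> exists N, forall n, (N <= n)%nat ->
        vnorm (vadd (u n) (vopp l)) < eps
}.

Definition vdist {X : Banach} (x y : X) : R := vnorm X (vadd X x (vopp X y)).

Record dual (X : Banach) := {
  dfun :> X -> R;
  dfun_add : forall x y, dfun (vadd X x y) = dfun x + dfun y;
  dfun_scal : forall a x, dfun (vscal X a x) = a * dfun x;
  dfun_bdd : exists M, forall x, Rabs (dfun x) <= M * vnorm X x
}.
Arguments dfun {X}.

(** ||a - b||_{X^*} < r  (dual operator norm; the infimum of admissible
    bounds is attained, so this is the literal unfolding). *)
Definition dual_dist_lt {X : Banach} (a b : dual X) (r : R) : Prop :=
  exists r', 0 <= r' /\ r' < r /\ forall x : X, Rabs (a x - b x) <= r' * vnorm X x.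

Definition dual_interior {X : Banach} (A : dual X -> Prop) (a : dual X) : Prop :=
  exists eps, 0 < eps /\ forall b, dual_dist_lt b a eps -> A b.
Definition dual_dense_in {X : Banach} (D U : dual X -> Prop) : Prop :=
  forall a, U a -> forall eps, 0 < eps -> exists b, D b /\ dual_dist_lt b a eps.
Definition X_interior {X : Banach} (A : X -> Prop) (x : X) : Prop :=
  exists eps, 0 < eps /\ forall y, vdist y x < eps -> A y.
Definition X_dense_in {X : Banach} (D U : X -> Prop) : Prop :=
  forall x, U x -> forall eps, 0 < eps -> exists y, D y /\ vdist y x < eps.

Inductive ER := Fin (r : R) | PInf.
Definition ER_le (u v : ER) : Prop :=
  match u, v with
  | Fin a, Fin b => a <= b
  | _, PInf => True
  | PInf, Fin _ => False
  end.
(** u - v, used only with v finite. *)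
Definition ER_minus (u v : ER) : ER :=
  match u, v with Fin a, Fin b => Fin (a - b) | _, _ => PInf end.
Definition ER_comb (t : R) (u v : ER) : ER :=
  match u, v with Fin a, Fin b => Fin (t * a + (1 - t) * b) | _, _ => PInf end.
Definition ER_sup (P : R -> Prop) (v : ER) : Prop :=
  (forall r, P r -> ER_le (Fin r) v) /\
  (forall w, (forall r, P r -> ER_le (Fin r) w) -> ER_le v w).

Section Fun.
Context {X : Banach}.

Definition dom (g : dual X -> ER) (a : dual X) : Prop := g a <> PInf.
Definition proper (g : dual X -> ER) : Prop := exists a, dom g a.
Definition convex (g : dual X -> ER) : Prop :=
  forall (a b c : dual X) (t : R), 0 < t < 1 ->
    (forall x, c x = t * a x + (1 - t) * b x) ->
    ER_le (g c) (ER_comb t (g a) (g b)).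

Definition weakstar_closed (C : dual X -> Prop) : Prop :=
  forall a, ~ C a -> exists (l : list X) (eps : R), 0 < eps /\
    forall b : dual X, (forall x, List.In x l -> Rabs (b x - a x) < eps) -> ~ C b.
Definition weakstar_lsc (g : dual X -> ER) : Prop :=
  forall c : R, weakstar_closed (fun a => ER_le (g a) (Fin c)).

Definition subdiff (g : dual X -> ER) (a : dual X) (x : X) : Prop :=
  dom g a /\ forall b : dual X, ER_le (Fin (b x - a x)) (ER_minus (g b) (g a)).

(** dom (g^*|_X) : g^*|_X(x) = sup_{a} (a x - g a) < +oo. *)
Definition dom_conj_X (g : dual X -> ER) (x : X) : Prop :=
  exists M, forall (a : dual X) (r : R), g a = Fin r -> a x - r <= M.

Definition DT (T : dual X -> X -> Prop) (a : dual X) : Prop := exists x, T a x.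
Definition ImT (T : dual X -> X -> Prop) (x : X) : Prop := exists a, T a x.

Fixpoint sumR (f : nat -> R) (n : nat) : R :=
  match n with O => 0 | S k => sumR f k + f k end.

(** The set of sums whose supremum is h(a). *)
Definition hset (T : dual X -> X -> Prop) (a0 a : dual X) (r : R) : Prop :=
  exists (n : nat) (as_ : nat -> dual X) (xs : nat -> X),
    as_ O = a0 /\ (forall i, (i <= n)%nat -> T (as_ i) (xs i)) /\
    r = sumR (fun i => as_ (S i) (xs i) - as_ i (xs i)) n
        + (a (xs n) - as_ n (xs n)).
End Fun.

(* Both parts rest on one approximation principle for a convex, norm-lower
   semicontinuous function F on a Banach space: by Baire's theorem F is locally
   bounded, hence locally Lipschitz, on the interior of its domain, so its
   subgradients are uniformly bounded near any segment of that interior.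
   Following a fine chain y_0, ..., y_N of points near a segment, each carrying
   a subgradient s_k, the sums of s_k (y_{k+1} - y_k) and of
   s_{k+1} (y_{k+1} - y_k) bracket F y_N - F y_0, and their difference telescopes
   to something of order (bound on the s_k) x (length of the segment) / N.

   For (i) apply this to g on X^* (complete for the dual norm), the points x_i of
   T being subgradients of g evaluated through X -> X^**.  For (ii) apply it on X
   to phi = g^*|_X, of which every x^* with x in T x^* is a subgradient at x;
   the chain sums of h are then sums of the second kind above.  To return from
   phi to g one needs g = phi^* on X^*, i.e. that every value of g is approached
   by affine minorants of the form x^* |-> <x^*, x> - beta with x in X; this
   follows from weak^*-lower semicontinuity by separating, in a finite
   dimensional space, an open convex set from the origin with Hahn-Banach.
   The inequality h <= g - g x_0^* is the subgradient inequality along a chain. *)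

From Stdlib Require Import Reals Lra Lia List Classical ClassicalEpsilon
  FunctionalExtensionality ProofIrrelevance.
Open Scope R_scope.

Arguments vadd_assoc {_}. Arguments vadd_comm {_}. Arguments vadd_0 {_}.
Arguments vadd_opp {_}. Arguments vscal_1 {_}. Arguments vscal_assoc {_}.
Arguments vscal_distr_v {_}. Arguments vscal_distr_s {_}. Arguments vnorm_nonneg {_}.
Arguments vnorm_eq0 {_}. Arguments vnorm_scal {_}. Arguments vnorm_triangle {_}.
Arguments vcomplete {_}.
Arguments dfun_add {_}. Arguments dfun_scal {_}. Arguments dfun_bdd {_}.

Section VectorAlgebra.
Variable Y : Banach.
Notation va := (vadd Y). Notation vs := (vscal Y). Notation vo := (vopp Y).
Notation vz := (vzero Y).

Lemma vadd_0l x : va vz x = x.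
Proof. rewrite vadd_comm; apply vadd_0. Qed.

Lemma vadd_cancel_l x y z : va x y = va x z -> y = z.
Proof.
  intro H. rewrite <- (vadd_0l y), <- (vadd_0l z).
  rewrite <- (vadd_opp x), (vadd_comm x (vo x)), <- !vadd_assoc, H. reflexivity.
Qed.

Lemma vscal_0 x : vs 0 x = vz.
Proof.
  apply (vadd_cancel_l (vs 0 x)). rewrite vadd_0, <- vscal_distr_s.
  now replace (0+0) with 0 by ring.
Qed.

Lemma vopp_vscal x : vo x = vs (-1) x.
Proof.
  apply (vadd_cancel_l x). rewrite vadd_opp.
  rewrite <- (vscal_1 x) at 1. rewrite <- vscal_distr_s.
  replace (1 + -1) with 0 by ring. now rewrite vscal_0.
Qed.

Definition lincomb4 (u1 u2 u3 u4 : Y) (a b c d : R) :=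
  va (va (vs a u1) (vs b u2)) (va (vs c u3) (vs d u4)).

Lemma vadd_swap A B C D : va (va A B) (va C D) = va (va A C) (va B D).
Proof.
  rewrite !vadd_assoc. f_equal. rewrite <- !vadd_assoc. f_equal. apply vadd_comm.
Qed.

Lemma lincomb4_add u1 u2 u3 u4 x y a b c d a' b' c' d' :
  x = lincomb4 u1 u2 u3 u4 a b c d -> y = lincomb4 u1 u2 u3 u4 a' b' c' d' ->
  va x y = lincomb4 u1 u2 u3 u4 (a+a') (b+b') (c+c') (d+d').
Proof.
  intros -> ->. unfold lincomb4. rewrite !vscal_distr_s.
  rewrite vadd_swap, (vadd_swap (vs a u1)), (vadd_swap (vs c u3)). reflexivity.
Qed.

Lemma lincomb4_scal k u1 u2 u3 u4 x a b c d :
  x = lincomb4 u1 u2 u3 u4 a b c d ->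
  vs k x = lincomb4 u1 u2 u3 u4 (k*a) (k*b) (k*c) (k*d).
Proof. intros ->. unfold lincomb4. now rewrite !vscal_distr_v, !vscal_assoc. Qed.

Lemma lincomb4_opp u1 u2 u3 u4 x a b c d :
  x = lincomb4 u1 u2 u3 u4 a b c d ->
  vo x = lincomb4 u1 u2 u3 u4 (-1*a) (-1*b) (-1*c) (-1*d).
Proof. intros H. rewrite vopp_vscal. now apply lincomb4_scal. Qed.

Lemma lincomb4_zero u1 u2 u3 u4 : vz = lincomb4 u1 u2 u3 u4 0 0 0 0.
Proof. unfold lincomb4. now rewrite !vscal_0, !vadd_0. Qed.
Lemma lincomb4_1 u1 u2 u3 u4 : u1 = lincomb4 u1 u2 u3 u4 1 0 0 0.
Proof. unfold lincomb4. now rewrite !vscal_0, !vadd_0, vscal_1. Qed.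
Lemma lincomb4_2 u1 u2 u3 u4 : u2 = lincomb4 u1 u2 u3 u4 0 1 0 0.
Proof. unfold lincomb4. now rewrite !vscal_0, !vadd_0, vadd_0l, vscal_1. Qed.
Lemma lincomb4_3 u1 u2 u3 u4 : u3 = lincomb4 u1 u2 u3 u4 0 0 1 0.
Proof. unfold lincomb4. now rewrite !vscal_0, !vadd_0, vadd_0l, vscal_1. Qed.
Lemma lincomb4_4 u1 u2 u3 u4 : u4 = lincomb4 u1 u2 u3 u4 0 0 0 1.
Proof. unfold lincomb4. now rewrite !vscal_0, !vadd_0l, vscal_1. Qed.

Lemma lincomb4_ext u1 u2 u3 u4 a b c d a' b' c' d' :
  a = a' -> b = b' -> c = c' -> d = d' ->
  lincomb4 u1 u2 u3 u4 a b c d = lincomb4 u1 u2 u3 u4 a' b' c' d'.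
Proof. intros -> -> -> ->; reflexivity. Qed.

End VectorAlgebra.

(* [vring4 u1 u2 u3 u4] reduces an equation between vector expressions built
   from u1, ..., u4 to four real equations between their coefficients. *)
Ltac lincomb4_reify u1 u2 u3 u4 e :=
  lazymatch e with
  | vadd ?Y ?x ?y =>
      let H1 := lincomb4_reify u1 u2 u3 u4 x in let H2 := lincomb4_reify u1 u2 u3 u4 y in
      constr:(lincomb4_add Y _ _ _ _ _ _ _ _ _ _ _ _ _ _ H1 H2)
  | vscal ?Y ?k ?x =>
      let H := lincomb4_reify u1 u2 u3 u4 x in constr:(lincomb4_scal Y k _ _ _ _ _ _ _ _ _ H)
  | vopp ?Y ?x =>
      let H := lincomb4_reify u1 u2 u3 u4 x in constr:(lincomb4_opp Y _ _ _ _ _ _ _ _ _ H)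
  | vzero ?Y => constr:(lincomb4_zero Y u1 u2 u3 u4)
  | _ => lazymatch e with
         | u1 => constr:(lincomb4_1 _ u1 u2 u3 u4)
         | u2 => constr:(lincomb4_2 _ u1 u2 u3 u4)
         | u3 => constr:(lincomb4_3 _ u1 u2 u3 u4)
         | u4 => constr:(lincomb4_4 _ u1 u2 u3 u4)
         end
  end.

Ltac vring4 u1 u2 u3 u4 :=
  lazymatch goal with
  | |- ?E1 = ?E2 =>
    let H1 := lincomb4_reify u1 u2 u3 u4 E1 in let H2 := lincomb4_reify u1 u2 u3 u4 E2 in
    refine (eq_trans H1 (eq_trans _ (eq_sym H2))); apply lincomb4_ext
  end.

Section Metric.
Variable Y : Banach.
Notation va := (vadd Y). Notation vs := (vscal Y). Notation vo := (vopp Y).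
Notation vz := (vzero Y). Notation nm := (vnorm Y).

Lemma vnorm_zero : nm vz = 0.
Proof. rewrite <- (vscal_0 Y vz), vnorm_scal, Rabs_R0. ring. Qed.

Lemma vnorm_opp x : nm (vo x) = nm x.
Proof. rewrite vopp_vscal, vnorm_scal, Rabs_left by lra. ring. Qed.

Lemma vdist_sym (x y : Y) : vdist x y = vdist y x.
Proof.
  unfold vdist. rewrite <- vnorm_opp. f_equal. vring4 x y (vzero Y) (vzero Y); ring.
Qed.

Lemma vdist_triangle (x y z : Y) : vdist x z <= vdist x y + vdist y z.
Proof.
  unfold vdist. replace (va x (vo z)) with (va (va x (vo y)) (va y (vo z))).
  apply vnorm_triangle. vring4 x y z (vzero Y); ring.
Qed.

Lemma vdist_self (x : Y) : vdist x x = 0.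
Proof. unfold vdist. rewrite vadd_opp. apply vnorm_zero. Qed.

Lemma vdist_nonneg (x y : Y) : 0 <= vdist x y.
Proof. apply vnorm_nonneg. Qed.

Lemma vdist_add_r (x w : Y) : vdist (va x w) x = nm w.
Proof. unfold vdist. f_equal. vring4 x w (vzero Y) (vzero Y); ring. Qed.

Lemma vdist_scal_add (x y : Y) (k : R) (a : Y) :
  vdist (va (vs k x) a) (va (vs k y) a) = Rabs k * vdist x y.
Proof. unfold vdist. rewrite <- vnorm_scal. f_equal. vring4 x y a (vzero Y); ring. Qed.

Lemma dfun_zero (s : dual Y) : s vz = 0.
Proof. rewrite <- (vscal_0 Y vz), dfun_scal. ring. Qed.

Lemma dfun_opp (s : dual Y) x : s (vo x) = - s x.
Proof. rewrite vopp_vscal, dfun_scal. ring. Qed.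

Lemma dfun_sub (s : dual Y) x y : s (va x (vo y)) = s x - s y.
Proof. rewrite dfun_add, dfun_opp. ring. Qed.

Lemma dfun_bdd_pos (s : dual Y) : exists K, 0 < K /\ forall x, Rabs (s x) <= K * nm x.
Proof.
  destruct (dfun_bdd s) as [M HM]. exists (Rabs M + 1). split.
  - pose proof (Rabs_pos M); lra.
  - intro x. eapply Rle_trans; [apply HM|]. apply Rmult_le_compat_r.
    + apply vnorm_nonneg.
    + pose proof (Rle_abs M); lra.
Qed.

Lemma dfun_lipschitz (s : dual Y) :
  exists K, 0 < K /\ forall x y, Rabs (s x - s y) <= K * vdist x y.
Proof.
  destruct (dfun_bdd_pos s) as [K [HK H]]. exists K; split; auto.
  intros x y. rewrite <- dfun_sub. apply H.
Qed.

Definition segment (p q : Y) (t : R) := va (vs (1-t) p) (vs t q).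

Lemma dfun_segment (s : dual Y) p q t : s (segment p q t) = (1-t) * s p + t * s q.
Proof. unfold segment. now rewrite dfun_add, !dfun_scal. Qed.

Lemma segment_0 p q : segment p q 0 = p.
Proof. unfold segment. vring4 p q (vzero Y) (vzero Y); ring. Qed.

Lemma segment_1 p q : segment p q 1 = q.
Proof. unfold segment. vring4 p q (vzero Y) (vzero Y); ring. Qed.

Lemma vdist_segment_l p q t : vdist (segment p q t) p = Rabs t * vdist q p.
Proof.
  unfold vdist, segment. rewrite <- vnorm_scal. f_equal. vring4 p q (vzero Y) (vzero Y); ring.
Qed.

End Metric.

Lemma archimed_nat (A : R) : exists n : nat, A < INR n.
Proof. destruct (INR_archimed 1 A) as [n Hn]; [lra|]. exists n. lra. Qed.

Lemma le_epsilon (a b : R) : (forall eps, 0 < eps -> a < b + eps) -> a <= b.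
Proof.
  intro H. destruct (Rle_or_lt a b) as [h|h]; auto.
  specialize (H ((a-b)/2) ltac:(lra)). lra.
Qed.

Lemma Rabs_le_between x a : Rabs x <= a -> -a <= x <= a.
Proof.
  intro H. pose proof (Rle_abs x). pose proof (Rle_abs (-x)). rewrite Rabs_Ropp in H1. lra.
Qed.

(* The finite part of an extended real; the value at [PInf] is junk. *)
Definition ER_fin (e : ER) := match e with Fin r => r | PInf => 0 end.

Lemma ER_le_PInf u : ER_le u PInf.
Proof. destruct u; simpl; auto. Qed.

Lemma ER_sup_intro (P : R -> Prop) v :
  (forall r, P r -> ER_le (Fin r) v) ->
  (forall c, ~ ER_le v (Fin c) -> exists r, P r /\ c < r) -> ER_sup P v.
Proof.
  intros H1 H2. split; auto. intros w Hw. destruct w as [c|].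
  - apply NNPP. intro Hn. destruct (H2 c Hn) as [r [Hr Hc]].
    specialize (Hw r Hr). simpl in Hw. lra.
  - apply ER_le_PInf.
Qed.

Section Baire.
Variable Y : Banach.

Lemma nested_balls (V : nat -> Y -> Prop) (y : Y) (rho : R) : 0 < rho ->
  (forall k z, V k z -> exists d, 0 < d /\ forall z', vdist z' z < d -> V k z') ->
  (forall k z r, vdist z y < rho -> 0 < r -> exists z', vdist z' z < r /\ V k z') ->
  exists (zs : nat -> Y) (rs : nat -> R), zs O = y /\ rs O = rho / 8 /\
    forall n, 0 < rs n /\ vdist (zs (S n)) (zs n) < rs n /\ 4 * rs (S n) <= rs n /\
      forall z, vdist z (zs (S n)) < 4 * rs (S n) -> V n z.
Proof.
  intros Hrho Hopen Hdense.
  set (Inv := fun st : Y * R => 0 < snd st /\ vdist (fst st) y + 2 * snd st < rho).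
  set (P := fun (k : nat) (st st' : Y * R) => Inv st ->
      Inv st' /\ vdist (fst st') (fst st) < snd st /\ 4 * snd st' <= snd st /\
      forall z, vdist z (fst st') < 4 * snd st' -> V k z).
  assert (Hstep : forall k st, exists st', P k st st').
  { intros k [z r]. destruct (classic (Inv (z, r))) as [[Hr Hz]|HI].
    - simpl in Hr, Hz.
      destruct (Hdense k z r ltac:(lra) Hr) as [z' [Hz'1 Hz'2]].
      destruct (Hopen k z' Hz'2) as [d [Hd Hd2]].
      exists (z', Rmin d r / 4). intros _. simpl.
      pose proof (Rmin_glb_lt d r 0 Hd Hr). pose proof (Rmin_l d r). pose proof (Rmin_r d r).
      pose proof (vdist_triangle _ z' z y).
      repeat split; simpl; try lra. intros z0 Hz0. apply Hd2. lra.
    - exists (z, r). intro; contradiction. }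
  destruct (choice (fun (kst : nat * (Y * R)) st' => P (fst kst) (snd kst) st'))
    as [step Hsf]; [intros [k st]; apply Hstep|].
  set (seqf := fix seqf (n : nat) : Y * R :=
         match n with O => (y, rho / 8) | S k => step (k, seqf k) end).
  assert (Hinv : forall n, Inv (seqf n)).
  { induction n; [split; simpl; rewrite ?vdist_self; lra|].
    simpl. apply (Hsf (n, seqf n) IHn). }
  exists (fun n => fst (seqf n)), (fun n => snd (seqf n)).
  split; [reflexivity|]. split; [reflexivity|].
  intro n. split; [apply (Hinv n)|]. apply (Hsf (n, seqf n) (Hinv n)).
Qed.

Lemma baire_ball (V : nat -> Y -> Prop) (y : Y) (rho : R) : 0 < rho ->
  (forall k z, V k z -> exists d, 0 < d /\ forall z', vdist z' z < d -> V k z') ->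
  (forall k z r, vdist z y < rho -> 0 < r -> exists z', vdist z' z < r /\ V k z') ->
  exists L, vdist L y < rho /\ forall k, V k L.
Proof.
  intros Hrho Hopen Hdense.
  destruct (nested_balls V y rho Hrho Hopen Hdense) as [zs [rs [Hz0 [Hr0' Hstep]]]].
  assert (Hr0 : forall n, 0 < rs n) by (intro n; apply Hstep).
  assert (Hnest : forall k m, (k <= m)%nat -> vdist (zs m) (zs k) + 2 * rs m <= 2 * rs k).
  { intros k m Hkm. induction Hkm; [rewrite vdist_self; lra|].
    destruct (Hstep m) as [_ [h1 [h2 _]]].
    pose proof (vdist_triangle _ (zs (S m)) (zs m) (zs k)). pose proof (Hr0 m). lra. }
  assert (Hsmall : forall eps, 0 < eps -> exists N, rs N < eps).
  { assert (Hrdec : forall n, rs n * (INR n + 1) <= rho / 8).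
    { induction n; [rewrite Hr0'; simpl; lra|].
      rewrite S_INR. destruct (Hstep n) as [_ [_ [h _]]]. pose proof (pos_INR n).
      pose proof (Hr0 n). pose proof (Hr0 (S n)). nra. }
    intros eps He. destruct (archimed_nat (rho / 8 / eps)) as [N HN]. exists N.
    specialize (Hrdec N). pose proof (pos_INR N). pose proof (Hr0 N).
    assert (rho / 8 < eps * INR N); [|nra].
    apply (Rmult_lt_reg_r (/ eps)); [apply Rinv_0_lt_compat; lra|].
    replace (eps * INR N * / eps) with (INR N) by (field; lra). exact HN. }
  destruct (vcomplete zs) as [L HL].
  { intros eps He. destruct (Hsmall (eps/4) ltac:(lra)) as [N HN]. exists N.
    intros m n Hm Hn. fold (vdist (zs m) (zs n)).
    pose proof (Hnest N m Hm). pose proof (Hnest N n Hn). pose proof (Hr0 m). pose proof (Hr0 n).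
    pose proof (vdist_triangle _ (zs m) (zs N) (zs n)). rewrite (vdist_sym _ (zs N) (zs n)) in H3.
    lra. }
  assert (HLk : forall k, vdist L (zs k) <= 2 * rs k).
  { intro k. apply le_epsilon. intros eps He. destruct (HL eps He) as [N HN].
    specialize (HN (max N k) (Nat.le_max_l _ _)). fold (vdist (zs (max N k)) L) in HN.
    pose proof (Hnest k (max N k) (Nat.le_max_r _ _)). pose proof (Hr0 (max N k)).
    pose proof (vdist_triangle _ L (zs (max N k)) (zs k)). rewrite vdist_sym in HN. lra. }
  exists L. split.
  - specialize (HLk 0%nat). rewrite Hz0, Hr0' in HLk. lra.
  - intro k. destruct (Hstep k) as [_ [_ [_ H3]]]. apply H3.
    pose proof (HLk (S k)). pose proof (Hr0 (S k)). lra.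
Qed.

End Baire.

Section ConvexFunction.
Variable Y : Banach.
Variable F : Y -> ER.
Notation va := (vadd Y). Notation vs := (vscal Y). Notation vo := (vopp Y).
Notation nm := (vnorm Y).

Definition fdom y := F y <> PInf.
Definition fval y := ER_fin (F y).
Definition fconvex := forall p q t, 0 < t < 1 ->
  ER_le (F (segment Y p q t)) (ER_comb (1-t) (F p) (F q)).
Definition flsc := forall y c, ~ ER_le (F y) (Fin c) ->
  exists d, 0 < d /\ forall z, vdist z y < d -> ~ ER_le (F z) (Fin c).
Definition fint y := exists r, 0 < r /\ forall z, vdist z y < r -> fdom z.
Definition subgrad y (s : dual Y) := fdom y /\
  forall z, ER_le (Fin (s z - s y)) (ER_minus (F z) (F y)).
Definition locally_bounded y :=
  exists r M, 0 < r /\ forall z, vdist z y < r -> fdom z /\ fval z <= M.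

Lemma fdom_Fin y : fdom y -> F y = Fin (fval y).
Proof. unfold fdom, fval; destruct (F y); simpl; congruence. Qed.

Lemma ER_le_Fin_fdom z M : ER_le (F z) (Fin M) -> fdom z /\ fval z <= M.
Proof.
  unfold fdom, fval. destruct (F z); simpl; intros H; [split; [congruence|auto]|contradiction].
Qed.

Lemma not_ER_le_Fin z c : fdom z -> ~ ER_le (F z) (Fin c) -> c < fval z.
Proof. unfold fdom, fval. destruct (F z); simpl; intros H1 H2; [lra|congruence]. Qed.

Lemma subgrad_le y s z : subgrad y s -> fdom z -> s z - s y <= fval z - fval y.
Proof.
  intros [Hy H] Hz. specialize (H z). rewrite (fdom_Fin _ Hy), (fdom_Fin _ Hz) in H.
  exact H.
Qed.

Lemma fint_fdom y : fint y -> fdom y.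
Proof. intros [r [Hr H]]. apply H. rewrite vdist_self. lra. Qed.

Lemma fint_open y : fint y -> exists rho, 0 < rho /\ forall z, vdist z y < rho -> fint z.
Proof.
  intros [r [Hr H]]. exists (r/2). split; [lra|]. intros z Hz. exists (r/2). split; [lra|].
  intros w Hw. apply H. pose proof (vdist_triangle Y w z y). lra.
Qed.

Hypothesis Fconv : fconvex.
Hypothesis Flsc : flsc.

Lemma fconvex_segment p q t : fdom p -> fdom q -> 0 <= t <= 1 ->
  fdom (segment Y p q t) /\ fval (segment Y p q t) <= (1-t) * fval p + t * fval q.
Proof.
  intros Hp Hq Ht.
  destruct (Req_dec t 0) as [->|H0]; [rewrite segment_0; split; auto; lra|].
  destruct (Req_dec t 1) as [->|H1]; [rewrite segment_1; split; auto; lra|].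
  pose proof (Fconv p q t ltac:(lra)) as HC.
  rewrite (fdom_Fin p Hp), (fdom_Fin q Hq) in HC. simpl in HC.
  unfold fdom, fval in *.
  destruct (F (segment Y p q t)); simpl in *; [split; [congruence|lra]|contradiction].
Qed.

Lemma flsc_lower y eps : fdom y -> 0 < eps ->
  exists d, 0 < d /\ forall z, vdist z y < d -> fdom z -> fval y - eps < fval z.
Proof.
  intros Hy He. destruct (Flsc y (fval y - eps)) as [d [Hd H]].
  { rewrite (fdom_Fin _ Hy); simpl; lra. }
  exists d; split; auto. intros z Hz Hdz. apply not_ER_le_Fin; auto.
Qed.

Lemma fint_segment p q t : fdom p -> fint q -> 0 < t <= 1 -> fint (segment Y p q t).
Proof.
  intros Hp [r [Hr Hq]] Ht. exists (t*r). split; [nra|].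
  intros z Hz.
  set (q' := va q (vs (/t) (va z (vo (segment Y p q t))))).
  assert (Hq' : fdom q').
  { apply Hq. unfold q'. rewrite vdist_add_r, vnorm_scal.
    fold (vdist z (segment Y p q t)).
    rewrite Rabs_right by (apply Rle_ge, Rlt_le, Rinv_0_lt_compat; lra).
    apply (Rmult_lt_reg_l t); [lra|]. rewrite <- Rmult_assoc, Rinv_r by lra. lra. }
  replace z with (segment Y p q' t) by (unfold q', segment; vring4 p q z (vzero Y); field; lra).
  apply fconvex_segment; auto; lra.
Qed.

Lemma fval_segment_near_start p q eps : fdom p -> fdom q -> 0 < eps ->
  exists t0, 0 < t0 <= 1 /\ forall t, 0 < t <= t0 ->
    fdom (segment Y p q t) /\ Rabs (fval (segment Y p q t) - fval p) < eps.
Proof.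
  intros Hp Hq He. destruct (flsc_lower p eps Hp He) as [d [Hd Hl]].
  set (A := Rabs (fval q - fval p) + 1). set (D := vdist q p + 1).
  assert (HA : 0 < A) by (unfold A; pose proof (Rabs_pos (fval q - fval p)); lra).
  assert (HD : 0 < D) by (unfold D; pose proof (vdist_nonneg _ q p); lra).
  exists (Rmin 1 (Rmin (eps / A) (d / D))). split.
  { split; [|apply Rmin_l].
    apply Rmin_glb_lt; [lra|apply Rmin_glb_lt; apply Rdiv_lt_0_compat; lra]. }
  intros t [Ht0 Ht].
  pose proof (Rmin_l 1 (Rmin (eps / A) (d / D))). pose proof (Rmin_r 1 (Rmin (eps / A) (d / D))).
  pose proof (Rmin_l (eps / A) (d / D)). pose proof (Rmin_r (eps / A) (d / D)).
  destruct (fconvex_segment p q t Hp Hq ltac:(lra)) as [Hs Hv]. split; auto.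
  assert (Hdist : vdist (segment Y p q t) p < d).
  { rewrite vdist_segment_l, Rabs_right by lra.
    apply Rle_lt_trans with (d / D * vdist q p).
    - apply Rmult_le_compat_r; [apply vdist_nonneg|lra].
    - unfold D. unfold Rdiv. rewrite Rmult_assoc.
      pose proof (vdist_nonneg Y q p).
      assert (vdist q p * / (vdist q p + 1) < 1)
        by (apply (Rmult_lt_reg_r (vdist q p + 1)); [lra|];
            rewrite Rmult_assoc, Rinv_l by lra; lra).
      nra. }
  specialize (Hl _ Hdist Hs).
  assert (t * (fval q - fval p) < eps).
  { apply Rlt_le_trans with (t * A).
    - apply Rmult_lt_compat_l; [lra|]. unfold A. pose proof (Rle_abs (fval q - fval p)). lra.
    - apply Rle_trans with (eps / A * A); [apply Rmult_le_compat_r; lra|].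
      unfold Rdiv. rewrite Rmult_assoc, Rinv_l by lra. lra. }
  apply Rabs_def1; lra.
Qed.

(* Reflecting through y: bounds on B(z, r) propagate to B(y, r/2) via 2y - z. *)
Lemma locally_bounded_of_ball y z r M : fdom (va (vs 2 y) (vo z)) -> 0 < r ->
  (forall z', vdist z' z < r -> ER_le (F z') (Fin M)) -> locally_bounded y.
Proof.
  intros HA Hr H'.
  set (A := va (vs 2 y) (vo z)) in *.
  exists (r/2), ((fval A + M)/2). split; [lra|].
  intros z'' Hz''.
  set (B := va z (vs 2 (va z'' (vo y)))).
  assert (HB : ER_le (F B) (Fin M)).
  { apply H'. unfold B. rewrite vdist_add_r, vnorm_scal, Rabs_right by lra.
    fold (vdist z'' y). lra. }
  apply ER_le_Fin_fdom in HB. destruct HB as [HB1 HB2].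
  replace z'' with (segment Y A B (1/2)) by (unfold segment, A, B; vring4 y z z'' (vzero Y); field).
  destruct (fconvex_segment A B (1/2) HA HB1 ltac:(lra)) as [h1 h2]. split; auto. lra.
Qed.

(* Otherwise every open set {F > k} is dense in B(y, rho/2), and Baire's theorem
   yields a point of dom F at which F exceeds every k. *)
Lemma fint_locally_bounded y : fint y -> locally_bounded y.
Proof.
  intros [rho [Hrho Hdom]].
  apply NNPP. intro NB.
  destruct (baire_ball Y (fun k z => ~ ER_le (F z) (Fin (INR k))) y (rho/2)) as [L [HLy HL]].
  - lra.
  - intros k z Hz. exact (Flsc z (INR k) Hz).
  - intros k z r Hz Hr. apply NNPP. intro H. apply NB.
    apply (locally_bounded_of_ball y z r (INR k)); auto.
    + apply Hdom. replace (vdist (va (vs 2 y) (vo z)) y) with (vdist y z).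
      * rewrite vdist_sym; lra.
      * unfold vdist. f_equal. vring4 y z (vzero Y) (vzero Y); ring.
    + intros z' Hz'. apply NNPP. intro H2. apply H. exists z'; auto.
  - assert (HLdom : fdom L) by (apply Hdom; lra).
    destruct (archimed_nat (fval L)) as [k Hk]. apply (HL k).
    rewrite (fdom_Fin _ HLdom). simpl. lra.
Qed.

(* z lies on the segment from y to q1 = y + (z - y)/lam, and y on the segment
   from z to q2 = y - (z - y)/lam, with q1 and q2 in the ball where F <= M. *)
Lemma fval_near_bounds y r M lam z : fdom y -> 0 < lam <= 1/2 ->
  (forall z, vdist z y < r -> fdom z /\ fval z <= M) -> vdist z y < r * lam ->
  fdom z /\ (1 + lam) * fval y - lam * M <= fval z <= (1 - lam) * fval y + lam * M.
Proof.
  intros Hy Hl HB Hz.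
  set (w := va z (vo y)).
  assert (Hw' : nm w / lam < r).
  { apply (Rmult_lt_reg_r lam); [lra|]. unfold Rdiv. rewrite Rmult_assoc, Rinv_l by lra.
    unfold w. fold (vdist z y). lra. }
  set (q1 := va y (vs (/lam) w)).
  assert (Hq1 : fdom q1 /\ fval q1 <= M).
  { apply HB. unfold q1. rewrite vdist_add_r, vnorm_scal, Rabs_right.
    - rewrite Rmult_comm. exact Hw'.
    - apply Rle_ge, Rlt_le, Rinv_0_lt_compat; lra. }
  set (q2 := va y (vs (- / lam) w)).
  assert (Hq2 : fdom q2 /\ fval q2 <= M).
  { apply HB. unfold q2. rewrite vdist_add_r, vnorm_scal, Rabs_left.
    - rewrite Ropp_involutive, Rmult_comm. exact Hw'.
    - apply Ropp_lt_gt_0_contravar, Rinv_0_lt_compat; lra. }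
  assert (Hz1 : z = segment Y y q1 lam).
  { unfold q1, w, segment. vring4 y z (vzero Y) (vzero Y); field; lra. }
  destruct (fconvex_segment y q1 lam Hy (proj1 Hq1) ltac:(lra)) as [Hdz Hv1].
  rewrite <- Hz1 in Hdz, Hv1.
  assert (Hy2 : y = segment Y z q2 (lam / (1 + lam))).
  { unfold q2, w, segment. vring4 y z (vzero Y) (vzero Y); field; lra. }
  assert (Hmu : 0 <= lam / (1 + lam) <= 1).
  { split; [apply Rmult_le_pos; [lra| left; apply Rinv_0_lt_compat; lra]|].
    apply (Rmult_le_reg_r (1+lam)); [lra|].
    unfold Rdiv. rewrite Rmult_assoc, Rinv_l by lra. lra. }
  destruct (fconvex_segment z q2 (lam/(1+lam)) Hdz (proj1 Hq2) Hmu) as [_ Hv2].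
  rewrite <- Hy2 in Hv2.
  assert (E : fval y * (1 + lam) <= fval z + lam * fval q2).
  { replace (fval z + lam * fval q2)
      with (((1 - lam/(1+lam)) * fval z + lam/(1+lam) * fval q2) * (1 + lam)) by (field; lra).
    apply Rmult_le_compat_r; lra. }
  destruct Hq1, Hq2.
  assert (lam * fval q1 <= lam * M) by (apply Rmult_le_compat_l; lra).
  assert (lam * fval q2 <= lam * M) by (apply Rmult_le_compat_l; lra).
  repeat split; auto; lra.
Qed.

Lemma fint_continuous y : fint y -> forall eps, 0 < eps ->
  exists d, 0 < d /\ forall z, vdist z y < d -> fdom z /\ Rabs (fval z - fval y) < eps.
Proof.
  intros Hy eps He. destruct (fint_locally_bounded y Hy) as [r [M [Hr HB]]].
  assert (HMy : fval y <= M) by (apply HB; rewrite vdist_self; lra).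
  set (K := M - fval y + 1). assert (HK : 0 < K) by (unfold K; lra).
  set (lam := Rmin (1/2) (eps / (2*K))).
  assert (Hl0 : 0 < lam) by (apply Rmin_glb_lt; [lra| apply Rdiv_lt_0_compat; lra]).
  assert (Hl1 : lam <= 1/2) by apply Rmin_l.
  assert (Hl2 : lam * K <= eps / 2).
  { apply Rle_trans with (eps / (2*K) * K); [apply Rmult_le_compat_r; [lra|apply Rmin_r]|].
    right. field. lra. }
  exists (r * lam). split; [nra|].
  intros z Hz.
  destruct (fval_near_bounds y r M lam z (fint_fdom y Hy) ltac:(lra) HB Hz) as [Hdz [Hlo Hup]].
  split; auto.
  assert (lam * K = lam * M - lam * fval y + lam) by (unfold K; ring).
  apply Rabs_def1; lra.
Qed.

Lemma fint_near y eps : fint y -> 0 < eps ->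
  exists d, 0 < d /\ forall z, vdist z y < d -> fint z /\ Rabs (fval z - fval y) < eps.
Proof.
  intros Hy He. destruct (fint_continuous y Hy eps He) as [d1 [Hd1 Hc]].
  destruct (fint_open y Hy) as [d2 [Hd2 Ho]].
  exists (Rmin d1 d2). split; [apply Rmin_glb_lt; lra|]. intros z Hz.
  pose proof (Rmin_l d1 d2). pose proof (Rmin_r d1 d2).
  split; [apply Ho; lra|apply Hc; lra].
Qed.

Lemma fint_segment_near_start p q eps : fdom p -> fint q -> 0 < eps ->
  exists t0, 0 < t0 <= 1 /\ forall t, 0 < t <= t0 ->
    fint (segment Y p q t) /\ Rabs (fval (segment Y p q t) - fval p) < eps.
Proof.
  intros Hp Hq He.
  destruct (fval_segment_near_start p q eps Hp (fint_fdom q Hq) He) as [t0 [Ht0 H]].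
  exists t0. split; auto. intros t Ht. split; [apply fint_segment; auto; lra|apply H; auto].
Qed.

Lemma segment_neighbourhood_bounded p q : fint p -> fint q ->
  exists r M, 0 < r /\ forall t, 0 <= t <= 1 -> forall z, vdist z (segment Y p q t) < r ->
     fdom z /\ fval z <= M.
Proof.
  intros Hp Hq. destruct (fint_locally_bounded p Hp) as [r1 [M1 [Hr1 H1]]].
  destruct (fint_locally_bounded q Hq) as [r2 [M2 [Hr2 H2]]].
  exists (Rmin r1 r2), (Rmax M1 M2). split; [apply Rmin_glb_lt; lra|].
  intros t Ht z Hz.
  set (w := va z (vo (segment Y p q t))).
  assert (Hw : nm w < Rmin r1 r2) by exact Hz.
  pose proof (Rmin_l r1 r2). pose proof (Rmin_r r1 r2).
  destruct (H1 (va p w)) as [Hd1 Hv1]; [rewrite vdist_add_r; lra|].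
  destruct (H2 (va q w)) as [Hd2 Hv2]; [rewrite vdist_add_r; lra|].
  replace z with (segment Y (va p w) (va q w) t)
    by (unfold w, segment; vring4 p q z (vzero Y); ring).
  destruct (fconvex_segment _ _ t Hd1 Hd2 Ht) as [h1 h2]. split; auto.
  pose proof (Rmax_l M1 M2). pose proof (Rmax_r M1 M2). nra.
Qed.

End ConvexFunction.

Lemma subgrad_norm_bound (Y : Banach) (F : Y -> ER) y s r m M : 0 < r ->
  (forall z, vdist z y < r -> fdom Y F z /\ m <= fval Y F z <= M) -> subgrad Y F y s ->
  forall z, Rabs (s z) <= (2 * (M - m) / r) * vnorm Y z.
Proof.
  intros Hr HB Hs z.
  destruct (Req_dec (vnorm Y z) 0) as [H0|H0].
  { apply vnorm_eq0 in H0. subst z. rewrite dfun_zero, Rabs_R0, vnorm_zero. lra. }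
  assert (Hn : 0 < vnorm Y z) by (pose proof (vnorm_nonneg z); lra).
  set (k := r / (2 * vnorm Y z)).
  assert (Hk : 0 < k) by (unfold k; apply Rdiv_lt_0_compat; lra).
  assert (Hkn : k * vnorm Y z = r/2) by (unfold k; field; lra).
  destruct (HB y) as [Hdy Hy]; [rewrite vdist_self; lra|].
  assert (Hstep : forall k', Rabs k' = k -> k' * s z <= M - m).
  { intros k' Hk'. destruct (HB (vadd Y y (vscal Y k' z))) as [Hd Hv].
    - rewrite vdist_add_r, vnorm_scal, Hk'. lra.
    - pose proof (subgrad_le Y F _ _ _ Hs Hd). rewrite dfun_add, dfun_scal in H. lra. }
  pose proof (Hstep k (Rabs_right k ltac:(lra))).
  pose proof (Hstep (-k) ltac:(rewrite Rabs_Ropp, Rabs_right; lra)).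
  replace (2 * (M - m) / r * vnorm Y z) with ((M - m) / k) by (unfold k; field; lra).
  assert (E : k * ((M - m) / k) = M - m) by (field; lra).
  apply Rabs_le. split; apply (Rmult_le_reg_l k); auto.
  - rewrite Ropp_mult_distr_r_reverse, E. lra.
  - rewrite E. lra.
Qed.

Lemma sumR_ext f g n : (forall k, (k < n)%nat -> f k = g k) -> sumR f n = sumR g n.
Proof.
  induction n; simpl; intros H; auto.
  rewrite IHn by (intros; apply H; lia). rewrite H by lia. auto.
Qed.

Lemma sumR_minus f g n : sumR (fun k => f k - g k) n = sumR f n - sumR g n.
Proof. induction n; simpl; [ring|]. rewrite IHn. ring. Qed.

Lemma sumR_le f g n : (forall k, (k < n)%nat -> f k <= g k) -> sumR f n <= sumR g n.
Proof.
  induction n; simpl; intros H; [lra|].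
  pose proof (H n ltac:(lia)). pose proof (IHn ltac:(intros; apply H; lia)). lra.
Qed.

Lemma INR_div_bounds k N : (0 < N)%nat -> (k <= N)%nat -> 0 <= INR k / INR N <= 1.
Proof.
  intros HN Hk. apply lt_0_INR in HN. apply le_INR in Hk. pose proof (pos_INR k). split.
  - apply Rmult_le_pos; [lra | left; apply Rinv_0_lt_compat; lra].
  - apply (Rmult_le_reg_r (INR N)); [lra|]. unfold Rdiv. rewrite Rmult_assoc, Rinv_l by lra. lra.
Qed.

Lemma sumR_telescope (d : nat -> R) (a c : R) n :
  sumR (fun k => a * (d (S k) - d k) + c) n = a * (d n - d O) + c * INR n.
Proof. induction n; [simpl; ring|]. cbn [sumR]. rewrite IHn, S_INR. ring. Qed.

Lemma chain_sum_sandwich (Y : Banach) (F : Y -> ER) N (ys : nat -> Y) (ss : nat -> dual Y) :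
  (forall k, (k <= N)%nat -> subgrad Y F (ys k) (ss k)) ->
  let d k := vadd Y (ys (S k)) (vopp Y (ys k)) in
  sumR (fun k => ss k (d k)) N <= fval Y F (ys N) - fval Y F (ys O) <=
  sumR (fun k => ss (S k) (d k)) N.
Proof.
  intros HS d. induction N; cbn [sumR]; [split; lra|].
  destruct (IHN ltac:(intros; apply HS; lia)) as [h1 h2].
  assert (Hk := HS N ltac:(lia)). assert (Hk1 := HS (S N) ltac:(lia)).
  pose proof (subgrad_le Y F _ _ _ Hk (proj1 Hk1)).
  pose proof (subgrad_le Y F _ _ _ Hk1 (proj1 Hk)).
  unfold d in *. rewrite !dfun_sub. split; lra.
Qed.

(* Replacing the chain points y, y' by the sample points of the segment they
   approximate reduces the increment to a multiple of s' (q - p) - s (q - p). *)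
Lemma chain_increment_bound (Y : Banach) (s s' : dual Y) (L eta : R) p q t t' y y' :
  (forall z, Rabs (s z) <= L * vnorm Y z) -> (forall z, Rabs (s' z) <= L * vnorm Y z) ->
  0 <= L -> vdist y (segment Y p q t) < eta -> vdist y' (segment Y p q t') < eta ->
  s' (vadd Y y' (vopp Y y)) - s (vadd Y y' (vopp Y y)) <=
  (t' - t) * ((s' q - s' p) - (s q - s p)) + 4 * L * eta.
Proof.
  intros Hs Hs' HL Hy Hy'.
  set (u := segment Y p q t) in *. set (u' := segment Y p q t') in *.
  assert (E : forall (r : dual Y) w v, r w = r v + r (vadd Y w (vopp Y v)))
    by (intros; rewrite dfun_sub; ring).
  rewrite !dfun_sub, (E s' y' u'), (E s' y u), (E s y' u'), (E s y u).
  unfold u, u'. rewrite !dfun_segment. fold u u'.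
  pose proof (Rabs_le_between _ _ (Hs' (vadd Y y' (vopp Y u')))).
  pose proof (Rabs_le_between _ _ (Hs' (vadd Y y (vopp Y u)))).
  pose proof (Rabs_le_between _ _ (Hs (vadd Y y' (vopp Y u')))).
  pose proof (Rabs_le_between _ _ (Hs (vadd Y y (vopp Y u)))).
  fold (vdist y' u') (vdist y u) in *.
  assert (L * vdist y' u' <= L * eta) by (apply Rmult_le_compat_l; lra).
  assert (L * vdist y u <= L * eta) by (apply Rmult_le_compat_l; lra).
  lra.
Qed.

Lemma chain_gap_bound (Y : Banach) (ys : nat -> Y) (ss : nat -> dual Y) p q L eta N :
  (0 < N)%nat -> 0 <= L ->
  (forall k, (k <= N)%nat -> forall z, Rabs (ss k z) <= L * vnorm Y z) ->
  (forall k, (k <= N)%nat -> vdist (ys k) (segment Y p q (INR k / INR N)) < eta) ->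
  sumR (fun k => ss (S k) (vadd Y (ys (S k)) (vopp Y (ys k))) -
                 ss k (vadd Y (ys (S k)) (vopp Y (ys k)))) N
    <= 2 * L * vdist q p / INR N + 4 * L * eta * INR N.
Proof.
  intros HN HL Hbd Hys.
  assert (HNr : 0 < INR N) by (apply lt_0_INR; lia).
  eapply Rle_trans.
  - apply sumR_le with (g := fun k => / INR N * ((ss (S k) q - ss (S k) p) - (ss k q - ss k p))
                                      + 4 * L * eta).
    intros k Hk. eapply Rle_trans.
    + apply (chain_increment_bound Y (ss k) (ss (S k)) L eta p q);
        try apply Hbd; try apply Hys; try lia; lra.
    + rewrite S_INR. right. field. lra.
  - rewrite (sumR_telescope (fun k => ss k q - ss k p) (/ INR N) (4 * L * eta)).
    assert (A1 := Hbd N (le_n N) (vadd Y q (vopp Y p))).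
    assert (A2 := Hbd O ltac:(lia) (vadd Y q (vopp Y p))).
    rewrite dfun_sub in A1, A2. fold (vdist q p) in A1, A2.
    apply Rabs_le_between in A1. apply Rabs_le_between in A2.
    apply Rplus_le_compat_r. unfold Rdiv. rewrite Rmult_comm.
    apply Rmult_le_compat_r; [left; apply Rinv_0_lt_compat|]; lra.
Qed.

Section SubgradientChains.
Variable Y : Banach.
Variable F : Y -> ER.
Notation va := (vadd Y). Notation vo := (vopp Y). Notation nm := (vnorm Y).
Notation fdom := (fdom Y F). Notation fval := (fval Y F). Notation fint := (fint Y F).
Notation subgrad := (subgrad Y F).
Hypothesis Fconv : fconvex Y F.
Hypothesis Flsc : flsc Y F.

(* The lower bound comes from the subgradient s0 at p, the upper one from
   local boundedness; the two give a Lipschitz bound on the subgradients. *)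
Lemma subgrad_bounded_near_segment p s0 q : fint p -> fint q -> subgrad p s0 ->
  exists r L, 0 < r /\ 0 < L /\ forall t, 0 <= t <= 1 -> forall y s,
    vdist y (segment Y p q t) < r -> subgrad y s -> forall z, Rabs (s z) <= L * nm z.
Proof.
  intros Hp Hq Hs0.
  destruct (segment_neighbourhood_bounded Y F Fconv Flsc p q Hp Hq) as [r1 [M [Hr1 HB]]].
  destruct (dfun_bdd_pos Y s0) as [K0 [HK0 HK0b]].
  set (d := vdist q p).
  assert (Hd : 0 <= d) by apply vdist_nonneg.
  set (m := fval p - K0 * (r1 + d)).
  assert (RB : forall t, 0 <= t <= 1 -> forall z, vdist z (segment Y p q t) < r1 ->
               fdom z /\ m <= fval z <= M).
  { intros t Ht z Hz. destruct (HB t Ht z Hz) as [Hdz Hvz]. split; auto. split; auto.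
    pose proof (subgrad_le Y F _ _ z Hs0 Hdz).
    pose proof (HK0b (va z (vo p))) as H0. rewrite dfun_sub in H0. fold (vdist z p) in H0.
    pose proof (vdist_triangle Y z (segment Y p q t) p) as H1.
    rewrite vdist_segment_l, Rabs_right in H1 by lra.
    assert (t * d <= d) by nra.
    assert (K0 * vdist z p <= K0 * (r1 + d)) by (apply Rmult_le_compat_l; unfold d in *; lra).
    apply Rabs_le_between in H0 as [H0' _]. unfold m. lra. }
  assert (HMm : m <= M).
  { destruct (RB 0 ltac:(lra) p) as [_ h]; [rewrite segment_0, vdist_self; lra|lra]. }
  exists (r1/2), (4 * (M - m) / r1 + 1). split; [lra|]. split.
  { assert (0 <= 4 * (M - m) / r1)
      by (apply Rmult_le_pos; [lra| left; apply Rinv_0_lt_compat; lra]).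
    lra. }
  intros t Ht y s Hy Hs z.
  eapply Rle_trans.
  - apply (subgrad_norm_bound Y F y s (r1/2) m M ltac:(lra)); auto.
    intros z' Hz'. apply (RB t Ht). pose proof (vdist_triangle Y z' y (segment Y p q t)). lra.
  - pose proof (vnorm_nonneg z).
    replace (2 * (M - m) / (r1 / 2)) with (4 * (M - m) / r1) by (field; lra). nra.
Qed.

Variable Sg : Y -> dual Y -> Prop.
Hypothesis HS : forall y s, Sg y s -> subgrad y s.
Hypothesis Hdense : forall y, fint y -> forall eta, 0 < eta ->
  exists y' s', Sg y' s' /\ vdist y' y < eta.

Lemma Sg_sample_segment p s0 q N eta : fint p -> fint q -> Sg p s0 -> (0 < N)%nat -> 0 < eta ->
  exists (ys : nat -> Y) (ss : nat -> dual Y), ys O = p /\ ss O = s0 /\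
    forall k, (k <= N)%nat ->
      Sg (ys k) (ss k) /\ vdist (ys k) (segment Y p q (INR k / INR N)) < eta.
Proof.
  intros Hp Hq Hs0 HN Heta.
  assert (HNr : 0 < INR N) by (apply lt_0_INR; lia).
  assert (Hch : forall k : nat, exists ys : Y * dual Y, (1 <= k <= N)%nat ->
            Sg (fst ys) (snd ys) /\ vdist (fst ys) (segment Y p q (INR k / INR N)) < eta).
  { intro k. destruct (classic (1 <= k <= N)%nat) as [Hk|Hk].
    - assert (Hi : fint (segment Y p q (INR k / INR N))).
      { apply fint_segment; auto using fint_fdom.
        destruct Hk as [Hk1 Hk2]. apply le_INR in Hk1, Hk2. simpl in Hk1. split.
        - apply Rdiv_lt_0_compat; lra.
        - apply (Rmult_le_reg_r (INR N)); [lra|].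
          unfold Rdiv. rewrite Rmult_assoc, Rinv_l by lra. lra. }
      destruct (Hdense _ Hi eta Heta) as [y' [s' [h1 h2]]]. exists (y', s'). auto.
    - exists (p, s0). intro; contradiction. }
  destruct (choice _ Hch) as [ch Hchs].
  exists (fun k => match k with O => p | _ => fst (ch k) end),
         (fun k => match k with O => s0 | _ => snd (ch k) end).
  split; [reflexivity|]. split; [reflexivity|]. intros [|k] Hk.
  - split; auto. replace (INR 0 / INR N) with 0 by (unfold Rdiv; rewrite INR_0; ring).
    rewrite segment_0, vdist_self. lra.
  - apply Hchs. lia.
Qed.

Lemma Sg_chain_exists p s0 q eps delta : fint p -> fint q -> Sg p s0 -> 0 < eps -> 0 < delta ->
  exists N (ys : nat -> Y) (ss : nat -> dual Y),
    ys O = p /\ ss O = s0 /\ (forall k, (k <= N)%nat -> Sg (ys k) (ss k)) /\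
    vdist (ys N) q < delta /\
    sumR (fun k => ss (S k) (va (ys (S k)) (vo (ys k))) - ss k (va (ys (S k)) (vo (ys k)))) N
      <= eps.
Proof.
  intros Hp Hq Hs0 He Hdl.
  destruct (subgrad_bounded_near_segment p s0 q Hp Hq (HS _ _ Hs0)) as [r [L [Hr [HL SB]]]].
  set (d := vdist q p). assert (Hd : 0 <= d) by apply vdist_nonneg.
  destruct (archimed_nat (4 * L * d / eps)) as [N0 HN0].
  set (N := S N0).
  assert (HN : 0 < INR N) by (unfold N; rewrite S_INR; pose proof (pos_INR N0); lra).
  assert (HN2 : 2 * L * d / INR N <= eps / 2).
  { apply (Rmult_le_reg_r (INR N)); [lra|].
    replace (2 * L * d / INR N * INR N) with (2 * L * d) by (field; lra).
    unfold N. rewrite S_INR. assert (4 * L * d / eps * eps = 4 * L * d) by (field; lra). nra. }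
  set (eta := Rmin r (Rmin delta (eps / (8 * L * INR N)))).
  assert (Heta1 : eta <= r) by apply Rmin_l.
  assert (Heta2 : eta <= delta) by (eapply Rle_trans; [apply Rmin_r|apply Rmin_l]).
  assert (Heta3 : eta <= eps / (8 * L * INR N)) by (eapply Rle_trans; [apply Rmin_r|apply Rmin_r]).
  assert (Heta : 0 < eta).
  { repeat apply Rmin_glb_lt; try lra. apply Rdiv_lt_0_compat; [lra|]. nra. }
  assert (Heta4 : 4 * L * eta * INR N <= eps / 2).
  { apply Rle_trans with (4 * L * (eps / (8 * L * INR N)) * INR N).
    - apply Rmult_le_compat_r; [lra|]. apply Rmult_le_compat_l; lra.
    - right. field. split; lra. }
  destruct (Sg_sample_segment p s0 q N eta Hp Hq Hs0 ltac:(unfold N; lia) Heta)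
    as [ys [ss [Hys0 [Hss0 Hys]]]].
  assert (Hbd : forall k, (k <= N)%nat -> forall z, Rabs (ss k z) <= L * vnorm Y z).
  { intros k Hk. destruct (Hys k Hk) as [h1 h2].
    apply (SB _ (INR_div_bounds k N ltac:(unfold N; lia) Hk) (ys k) (ss k)); [lra|auto]. }
  exists N, ys, ss. split; [auto|]. split; [auto|]. split; [intros k Hk; apply Hys; auto|].
  split.
  - destruct (Hys N (le_n N)) as [_ h].
    replace (INR N / INR N) with 1 in h by (field; lra). rewrite segment_1 in h. lra.
  - pose proof (chain_gap_bound Y ys ss p q L eta N ltac:(unfold N; lia) ltac:(lra) Hbd
                  (fun k Hk => proj2 (Hys k Hk))).
    fold d in H. lra.
Qed.

End SubgradientChains.

Lemma eq_0_of_Rabs_le_eps (r C : R) : 0 <= C ->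
  (forall eps, 0 < eps -> Rabs r <= eps * C) -> r = 0.
Proof.
  intros HC H. destruct (Req_dec r 0) as [|Hr]; auto. exfalso.
  pose proof (Rabs_pos_lt r Hr).
  specialize (H (Rabs r / (2 * (C + 1))) ltac:(apply Rdiv_lt_0_compat; lra)).
  assert (Rabs r / (2 * (C + 1)) * C < Rabs r).
  { apply (Rmult_lt_reg_r (2 * (C + 1))); [lra|].
    replace (Rabs r / (2 * (C + 1)) * C * (2 * (C + 1))) with (Rabs r * C) by (field; lra).
    nra. }
  lra.
Qed.

Section DualBanach.
Variable X : Banach.
Notation nm := (vnorm X).

Lemma dual_ext (a b : dual X) : (forall x, a x = b x) -> a = b.
Proof.
  destruct a as [fa pa1 pa2 pa3], b as [fb pb1 pb2 pb3]; simpl. intro H.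
  assert (fa = fb) by (apply functional_extensionality; auto). subst fb.
  f_equal; apply proof_irrelevance.
Qed.

Definition mkdual (f : X -> R) (h1 : forall x y, f (vadd X x y) = f x + f y)
  (h2 : forall a x, f (vscal X a x) = a * f x)
  (h3 : exists M, forall x, Rabs (f x) <= M * nm x) : dual X :=
  {| dfun := f; dfun_add := h1; dfun_scal := h2; dfun_bdd := h3 |}.

Definition dual_zero : dual X.
Proof.
  refine (mkdual (fun _ => 0) _ _ _); [intros; ring|intros; ring|].
  exists 0. intros. rewrite Rabs_R0. lra.
Defined.

Definition dual_add (a b : dual X) : dual X.
Proof.
  refine (mkdual (fun x => a x + b x) _ _ _);
    [intros; rewrite !dfun_add; ring|intros; rewrite !dfun_scal; ring|].
  destruct (dfun_bdd a) as [Ma Ha], (dfun_bdd b) as [Mb Hb]. exists (Ma + Mb). intro x.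
  eapply Rle_trans; [apply Rabs_triang|]. specialize (Ha x); specialize (Hb x). lra.
Defined.

Definition dual_scal (t : R) (a : dual X) : dual X.
Proof.
  refine (mkdual (fun x => t * a x) _ _ _);
    [intros; rewrite !dfun_add; ring|intros; rewrite !dfun_scal; ring|].
  destruct (dfun_bdd a) as [Ma Ha]. exists (Rabs t * Ma). intro x.
  rewrite Rabs_mult, Rmult_assoc. apply Rmult_le_compat_l; [apply Rabs_pos|auto].
Defined.

Definition dual_opp (a : dual X) : dual X := dual_scal (-1) a.

Definition dual_bound (a : dual X) (M : R) := 0 <= M /\ forall x, Rabs (a x) <= M * nm x.

(* The operator norm, as the infimum of the admissible bounds. *)
Definition dnorm (a : dual X) : R.
Proof.
  refine (- proj1_sig (completeness (fun y => exists M, dual_bound a M /\ y = - M) _ _)).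
  - exists 0. intros y [M [[HM _] ->]]. lra.
  - destruct (dfun_bdd_pos X a) as [K [HK H]]. exists (-K), K. repeat split; auto. lra.
Defined.

Lemma dnorm_spec (a : dual X) :
  dual_bound a (dnorm a) /\ forall M, dual_bound a M -> dnorm a <= M.
Proof.
  unfold dnorm. destruct (completeness _ _ _) as [l [Hub Hl]]. simpl.
  assert (H1 : forall M, dual_bound a M -> - l <= M).
  { intros M HM. assert (-M <= l) by (apply Hub; eauto). lra. }
  split; auto.
  assert (Hl0 : l <= 0) by (apply Hl; intros y [M [[HM _] ->]]; lra).
  split; [lra|].
  intro x. pose proof (vnorm_nonneg x). apply le_epsilon. intros eps He.
  set (e := eps / (nm x + 1)).
  assert (He' : 0 < e) by (apply Rdiv_lt_0_compat; lra).
  assert (Hex : exists M, dual_bound a M /\ M < - l + e).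
  { apply NNPP. intro Hn.
    assert (l <= l - e); [|lra].
    apply Hl. intros y [M [HM ->]]. destruct (Rle_or_lt (- l + e) M) as [h|h]; [lra|].
    exfalso. apply Hn. eauto. }
  destruct Hex as [M [[HM0 HM] HMl]].
  assert (M * nm x <= (- l + e) * nm x) by (apply Rmult_le_compat_r; lra).
  assert (e * nm x < eps).
  { apply (Rmult_lt_reg_r (nm x + 1)); [lra|].
    unfold e. replace (eps / (nm x + 1) * nm x * (nm x + 1)) with (eps * nm x) by (field; lra).
    nra. }
  specialize (HM x). nra.
Qed.

Lemma dnorm_bound (a : dual X) (x : X) : Rabs (a x) <= dnorm a * nm x.
Proof. apply (proj2 (proj1 (dnorm_spec a))). Qed.

Lemma dnorm_nonneg (a : dual X) : 0 <= dnorm a.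
Proof. apply (proj1 (proj1 (dnorm_spec a))). Qed.

Lemma dnorm_le (a : dual X) M : dual_bound a M -> dnorm a <= M.
Proof. apply (proj2 (dnorm_spec a)). Qed.

Lemma dnorm_sub_bound (a b : dual X) x : Rabs (a x - b x) <= dnorm (dual_add a (dual_opp b)) * nm x.
Proof.
  pose proof (dnorm_bound (dual_add a (dual_opp b)) x) as H. simpl in H.
  replace (a x + -1 * b x) with (a x - b x) in H by ring. exact H.
Qed.

Lemma Un_cv_Rabs_le (v : nat -> R) (l c B : R) (N : nat) :
  Un_cv v l -> (forall m, (N <= m)%nat -> Rabs (c - v m) <= B) -> Rabs (c - l) <= B.
Proof.
  intros Hv H. apply le_epsilon. intros eps He. destruct (Hv eps He) as [N1 HN1].
  specialize (HN1 (max N N1) (Nat.le_max_r _ _)). specialize (H (max N N1) (Nat.le_max_l _ _)).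
  unfold Rdist in HN1. pose proof (Rabs_triang (c - v (max N N1)) (v (max N N1) - l)).
  replace (c - v (max N N1) + (v (max N N1) - l)) with (c - l) in H0 by ring. lra.
Qed.

Lemma uniform_limit_dual (u : nat -> dual X) (Lf : X -> R) :
  (forall eps, 0 < eps -> exists N, forall n x, (N <= n)%nat ->
     Rabs (u n x - Lf x) <= eps * nm x) ->
  exists l : dual X, forall x, l x = Lf x.
Proof.
  intros Hunif.
  assert (Hadd : forall x y, Lf (vadd X x y) = Lf x + Lf y).
  { intros x y. apply Rminus_diag_uniq.
    apply (eq_0_of_Rabs_le_eps _ (nm (vadd X x y) + nm x + nm y)).
    { pose proof (vnorm_nonneg (vadd X x y)). pose proof (vnorm_nonneg x).
      pose proof (vnorm_nonneg y). lra. }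
    intros eps He. destruct (Hunif eps He) as [N HN].
    pose proof (Rabs_le_between _ _ (HN N (vadd X x y) (le_n N))) as H1.
    pose proof (Rabs_le_between _ _ (HN N x (le_n N))).
    pose proof (Rabs_le_between _ _ (HN N y (le_n N))).
    rewrite dfun_add in H1. apply Rabs_le. lra. }
  assert (Hscal : forall a x, Lf (vscal X a x) = a * Lf x).
  { intros a x. apply Rminus_diag_uniq.
    apply (eq_0_of_Rabs_le_eps _ (nm (vscal X a x) + Rabs a * nm x)).
    { pose proof (vnorm_nonneg (vscal X a x)). pose proof (vnorm_nonneg x).
      pose proof (Rabs_pos a). nra. }
    intros eps He. destruct (Hunif eps He) as [N HN].
    pose proof (HN N (vscal X a x) (le_n N)) as H1. rewrite dfun_scal in H1.
    assert (H2 : Rabs (a * u N x - a * Lf x) <= Rabs a * (eps * nm x)).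
    { rewrite <- Rmult_minus_distr_l, Rabs_mult.
      apply Rmult_le_compat_l; [apply Rabs_pos|auto]. }
    apply Rabs_le_between in H1. apply Rabs_le_between in H2. apply Rabs_le. lra. }
  assert (Hbdd : exists M, forall x, Rabs (Lf x) <= M * nm x).
  { destruct (Hunif 1 ltac:(lra)) as [N HN]. exists (dnorm (u N) + 1). intro x.
    pose proof (Rabs_le_between _ _ (HN N x (le_n N))).
    pose proof (Rabs_le_between _ _ (dnorm_bound (u N) x)).
    apply Rabs_le. lra. }
  exists (mkdual Lf Hadd Hscal Hbdd). reflexivity.
Qed.

Lemma dual_complete (u : nat -> dual X) :
  (forall eps, 0 < eps -> exists N, forall m n, (N <= m)%nat -> (N <= n)%nat ->
        dnorm (dual_add (u m) (dual_opp (u n))) < eps) ->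
  exists l, forall eps, 0 < eps -> exists N, forall n, (N <= n)%nat ->
        dnorm (dual_add (u n) (dual_opp l)) < eps.
Proof.
  intros Hc.
  assert (Hcc : forall x, Cauchy_crit (fun n => u n x)).
  { intros x eps He. pose proof (vnorm_nonneg x).
    destruct (Hc (eps / (nm x + 1))) as [N HN]; [apply Rdiv_lt_0_compat; lra|].
    exists N. intros n m Hn Hm. unfold Rdist. eapply Rle_lt_trans; [apply dnorm_sub_bound|].
    pose proof (HN n m Hn Hm). pose proof (dnorm_nonneg (dual_add (u n) (dual_opp (u m)))).
    apply Rle_lt_trans with (eps / (nm x + 1) * nm x); [apply Rmult_le_compat_r; lra|].
    apply (Rmult_lt_reg_r (nm x + 1)); [lra|].
    replace (eps / (nm x + 1) * nm x * (nm x + 1)) with (eps * nm x) by (field; lra). nra. }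
  destruct (choice (fun x l => Un_cv (fun n => u n x) l))
    as [Lf HLf]; [intro x; destruct (R_complete _ (Hcc x)) as [l Hl]; eauto|].
  assert (Hunif : forall eps, 0 < eps -> exists N, forall n x, (N <= n)%nat ->
                   Rabs (u n x - Lf x) <= eps * nm x).
  { intros eps He. destruct (Hc eps He) as [N HN]. exists N. intros n x Hn.
    apply (Un_cv_Rabs_le (fun m => u m x) _ _ _ N (HLf x)). intros m Hm.
    eapply Rle_trans; [apply dnorm_sub_bound|].
    apply Rmult_le_compat_r; [apply vnorm_nonneg|]. left. apply HN; auto. }
  destruct (uniform_limit_dual u Lf Hunif) as [l Hl].
  exists l. intros eps He. destruct (Hunif (eps/2) ltac:(lra)) as [N HN]. exists N. intros n Hn.
  apply Rle_lt_trans with (eps/2); [|lra]. apply dnorm_le. split; [lra|].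
  intro x. simpl. rewrite Hl. replace (u n x + -1 * Lf x) with (u n x - Lf x) by ring. auto.
Qed.

Lemma dnorm_scal t (a : dual X) : dnorm (dual_scal t a) = Rabs t * dnorm a.
Proof.
  apply Rle_antisym.
  - apply dnorm_le. split; [apply Rmult_le_pos; [apply Rabs_pos|apply dnorm_nonneg]|].
    intro x. simpl. rewrite Rabs_mult, Rmult_assoc.
    apply Rmult_le_compat_l; [apply Rabs_pos|apply dnorm_bound].
  - destruct (Req_dec t 0) as [->|Ht].
    { rewrite Rabs_R0, Rmult_0_l. apply dnorm_nonneg. }
    assert (Hta : 0 < Rabs t) by (apply Rabs_pos_lt; auto).
    assert (H : dnorm a <= dnorm (dual_scal t a) / Rabs t).
    { apply dnorm_le. split.
      { apply Rmult_le_pos; [apply dnorm_nonneg|left; apply Rinv_0_lt_compat; auto]. }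
      intro x. pose proof (dnorm_bound (dual_scal t a) x) as H. simpl in H.
      rewrite Rabs_mult in H. apply (Rmult_le_reg_l (Rabs t)); auto.
      replace (Rabs t * (dnorm (dual_scal t a) / Rabs t * nm x))
        with (dnorm (dual_scal t a) * nm x) by (field; lra). auto. }
    apply (Rmult_le_compat_l (Rabs t)) in H; [|lra].
    replace (Rabs t * (dnorm (dual_scal t a) / Rabs t)) with (dnorm (dual_scal t a)) in H
      by (field; lra). lra.
Qed.

Definition dual_banach : Banach.
Proof.
  refine {| car := dual X; vzero := dual_zero; vadd := dual_add; vopp := dual_opp;
            vscal := dual_scal; vnorm := dnorm; vnorm_scal := dnorm_scal;
            vcomplete := dual_complete |};
    try (intros; apply dual_ext; intros; simpl; ring).
  - apply dnorm_nonneg.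
  - intros a Ha. apply dual_ext. intro x. simpl. pose proof (dnorm_bound a x) as H.
    rewrite Ha, Rmult_0_l in H. pose proof (Rabs_pos (a x)).
    apply (eq_0_of_Rabs_le_eps _ 0); [lra|]. intros; lra.
  - intros a b. apply dnorm_le. split.
    + pose proof (dnorm_nonneg a); pose proof (dnorm_nonneg b); lra.
    + intro x. simpl. eapply Rle_trans; [apply Rabs_triang|].
      pose proof (dnorm_bound a x). pose proof (dnorm_bound b x). lra.
Defined.

Lemma dual_dist_lt_iff (a b : dual X) eps :
  dual_dist_lt a b eps <-> @vdist dual_banach a b < eps.
Proof.
  change (@vdist dual_banach a b) with (dnorm (dual_add a (dual_opp b))). split.
  - intros [r' [Hr0 [Hr Hb]]]. apply Rle_lt_trans with r'; auto. apply dnorm_le. split; auto.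
    intro x. simpl. replace (a x + -1 * b x) with (a x - b x) by ring. auto.
  - intro H. exists (dnorm (dual_add a (dual_opp b))). repeat split; auto.
    + apply dnorm_nonneg.
    + intro x. apply dnorm_sub_bound.
Qed.

Definition evalX (x : X) : dual dual_banach.
Proof.
  refine {| dfun := fun z : dual_banach => dfun (z : dual X) x |};
    [intros; reflexivity|intros; reflexivity|].
  exists (nm x). intro z. rewrite Rmult_comm. apply dnorm_bound.
Defined.

End DualBanach.

Section Chains.
Variable X : Banach.
Variable T : dual X -> X -> Prop.
Variable a0 : dual X.

(* [chain b x C]: a chain of points of Gr T from (a0, _) to (b, x) whose sum
   of terms <x_i, x_{i+1}^* - x_i^*> is C; hset collects C + <x, a - b>. *)
Definition chain (b : dual X) (x : X) (C : R) :=
  exists n (as_ : nat -> dual X) (xs : nat -> X),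
    as_ O = a0 /\ (forall i, (i <= n)%nat -> T (as_ i) (xs i)) /\ as_ n = b /\ xs n = x /\
    C = sumR (fun i => as_ (S i) (xs i) - as_ i (xs i)) n.

Lemma chain_start x0 : T a0 x0 -> chain a0 x0 0.
Proof. intro H. exists O, (fun _ => a0), (fun _ => x0). repeat split; auto. Qed.

Lemma chain_extend b x C b' x' : chain b x C -> T b' x' -> chain b' x' (C + b' x - b x).
Proof.
  intros [n [as_ [xs [H0 [HT [Hb [Hx HC]]]]]]] HT'.
  exists (S n), (fun i => if Nat.leb i n then as_ i else b'),
    (fun i => if Nat.leb i n then xs i else x').
  assert (En : Nat.leb (S n) n = false) by (apply Nat.leb_gt; lia).
  split; [auto|]. split.
  { intros i Hi. destruct (Nat.leb i n) eqn:E; [apply Nat.leb_le in E; auto|auto]. }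
  rewrite En. repeat split; auto.
  cbn [sumR]. rewrite En, (proj2 (Nat.leb_le n n) (le_n n)).
  rewrite (sumR_ext _ (fun i => as_ (S i) (xs i) - as_ i (xs i))); [subst; ring|].
  intros k Hk. rewrite (proj2 (Nat.leb_le k n)), (proj2 (Nat.leb_le (S k) n)) by lia. auto.
Qed.

Lemma chain_hset b x C a : chain b x C -> hset T a0 a (C + a x - b x).
Proof.
  intros [n [as_ [xs [H0 [HT [Hb [Hx HC]]]]]]].
  exists n, as_, xs. repeat split; auto. subst. ring.
Qed.

Lemma hset_chain a r : hset T a0 a r -> exists b x C, chain b x C /\ r = C + a x - b x.
Proof.
  intros [n [as_ [xs [H0 [HT Hr]]]]].
  exists (as_ n), (xs n), (sumR (fun i => as_ (S i) (xs i) - as_ i (xs i)) n).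
  split; [exists n, as_, xs; repeat split; auto|]. rewrite Hr. ring.
Qed.

Lemma chain_sum N (as_ : nat -> dual X) (xs : nat -> X) C :
  chain (as_ O) (xs O) C -> (forall k, (k <= N)%nat -> T (as_ k) (xs k)) ->
  chain (as_ N) (xs N) (C + sumR (fun i => as_ (S i) (xs i) - as_ i (xs i)) N).
Proof.
  intros H0 HT. induction N; cbn [sumR].
  - replace (C + 0) with C by ring. exact H0.
  - set (Sm := sumR (fun i => as_ (S i) (xs i) - as_ i (xs i)) N) in *.
    replace (C + (Sm + (as_ (S N) (xs N) - as_ N (xs N))))
      with (C + Sm + as_ (S N) (xs N) - as_ N (xs N)) by ring.
    apply chain_extend; auto.
Qed.

Variable g : dual X -> ER.
Hypothesis HT : forall a x, T a x -> subdiff g a x.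

Lemma chain_le b x C : chain b x C -> dom g a0 ->
  dom g b /\ C <= ER_fin (g b) - ER_fin (g a0).
Proof.
  intros [n [as_ [xs [H0 [HTs [Hb [Hx HC]]]]]]] Ha0. subst.
  assert (H : forall k, (k <= n)%nat -> dom g (as_ k) /\
      sumR (fun i => as_ (S i) (xs i) - as_ i (xs i)) k <= ER_fin (g (as_ k)) - ER_fin (g (as_ O))).
  { induction k; intros Hk; [split; auto; simpl; lra|].
    destruct (IHk ltac:(lia)) as [h1 h2].
    destruct (HT _ _ (HTs (S k) Hk)) as [hd _].
    destruct (HT _ _ (HTs k ltac:(lia))) as [_ hs].
    specialize (hs (as_ (S k))). split; auto. cbn [sumR].
    unfold dom in *. destruct (g (as_ (S k))), (g (as_ k)); simpl in *; try congruence. lra. }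
  apply H. auto.
Qed.

Lemma hset_le a r : hset T a0 a r -> dom g a0 -> ER_le (Fin r) (ER_minus (g a) (g a0)).
Proof.
  intros H Ha0. destruct (hset_chain a r H) as [b [x [C [HP ->]]]].
  destruct (chain_le b x C HP Ha0) as [Hb HC].
  assert (HTb : T b x).
  { destruct HP as [n [as_ [xs [_ [HTs [Hb' [Hx _]]]]]]]. subst. auto. }
  destruct (HT _ _ HTb) as [_ hs]. specialize (hs a).
  unfold dom in *. destruct (g a), (g b), (g a0); simpl in *; try congruence; lra.
Qed.

End Chains.

Lemma ER_not_le_gap e c : ~ ER_le e (Fin c) -> exists c', c < c' /\ ~ ER_le e (Fin c').
Proof.
  destruct e as [v|]; simpl; intro H.
  - exists ((c + v) / 2). lra.
  - exists (c + 1). split; [lra|auto].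
Qed.

Lemma choice_upto {A : Type} (P : nat -> A -> Prop) N :
  inhabited A -> (forall k, (k <= N)%nat -> exists x, P k x) ->
  exists f : nat -> A, forall k, (k <= N)%nat -> P k (f k).
Proof.
  intros [a] H.
  destruct (choice (fun k x => (k <= N)%nat -> P k x)) as [f Hf]; [|eauto].
  intro k. destruct (Compare_dec.le_dec k N) as [Hk|Hk].
  - destruct (H k Hk) as [x Hx]. eauto.
  - exists a. intro; contradiction.
Qed.

Fixpoint norm_sum {X : Banach} (l : list X) : R :=
  match l with nil => 0 | x :: l' => vnorm X x + norm_sum l' end.

Lemma norm_sum_nonneg {X : Banach} (l : list X) : 0 <= norm_sum l.
Proof. induction l; simpl; [lra|]. pose proof (vnorm_nonneg a). lra. Qed.

Lemma norm_sum_In {X : Banach} (l : list X) x : In x l -> vnorm X x <= norm_sum l.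
Proof.
  induction l; simpl; [tauto|]. intros [->|H].
  - pose proof (norm_sum_nonneg l). lra.
  - specialize (IHl H). pose proof (vnorm_nonneg a). lra.
Qed.

Lemma dual_dist_eval_lt (X : Banach) (a b : dual X) x e :
  vdist (X := dual_banach X) b a < e / (vnorm X x + 1) -> Rabs (b x - a x) < e.
Proof.
  intro H. pose proof (vnorm_nonneg x). pose proof (dnorm_sub_bound X b a x).
  pose proof (vdist_nonneg (dual_banach X) b a).
  change (dnorm X (dual_add X b (dual_opp X a))) with (vdist (X := dual_banach X) b a) in H1.
  assert (0 < e) by (apply Rlt_le_trans with (e / (vnorm X x + 1) * (vnorm X x + 1));
    [nra|right; field; lra]).
  eapply Rle_lt_trans; [exact H1|].
  apply Rle_lt_trans with (e / (vnorm X x + 1) * vnorm X x); [apply Rmult_le_compat_r; lra|].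
  replace (e / (vnorm X x + 1) * vnorm X x) with (e - e / (vnorm X x + 1)) by (field; lra).
  assert (0 < e / (vnorm X x + 1)) by (apply Rdiv_lt_0_compat; lra). lra.
Qed.

Section DualChains.
Variable X : Banach.
Variable g : dual X -> ER.
Variable T : dual X -> X -> Prop.
Variable a0 : dual X.
Hypothesis Hconv : convex g.
Hypothesis Hlsc : weakstar_lsc g.
Hypothesis HT : forall a x, T a x -> subdiff g a x.
Hypothesis HD : DT T a0.
Notation XS := (dual_banach X).
Notation gval := (fval XS g).

Lemma fconvex_dual : fconvex XS g.
Proof. intros p q t Ht. apply Hconv; [lra|]. intro x. simpl. ring. Qed.

Lemma flsc_dual : flsc XS g.
Proof.
  intros a c Hac. destruct (Hlsc c a Hac) as [l [eps [He H]]].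
  pose proof (norm_sum_nonneg l).
  exists (eps / (norm_sum l + 1)). split; [apply Rdiv_lt_0_compat; lra|].
  intros b Hb. apply H. intros x Hx. apply (dual_dist_eval_lt X a b x eps).
  eapply Rlt_le_trans; [exact Hb|]. pose proof (norm_sum_In l x Hx).
  pose proof (vnorm_nonneg x).
  apply Rmult_le_compat_l; [lra|]. apply Rinv_le_contravar; lra.
Qed.

Definition Sg_T (b : XS) (s : dual XS) := exists x, T b x /\ s = evalX X x.

Lemma Sg_T_subgrad y s : Sg_T y s -> subgrad XS g y s.
Proof. intros [x [Hx ->]]. destruct (HT _ _ Hx) as [Hd Hs]. split; auto. Qed.

Lemma fint_dual_iff a : fint XS g a <-> dual_interior (dom g) a.
Proof.
  split; intros [r [Hr H]]; exists r; split; auto; intros b Hb; apply H;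
    apply dual_dist_lt_iff; auto.
Qed.

Hypothesis Hint : exists a, dual_interior (dom g) a.
Hypothesis Hdense : dual_dense_in (DT T) (dual_interior (dom g)).

Lemma Sg_T_dense y : fint XS g y -> forall eta, 0 < eta ->
  exists y' s', Sg_T y' s' /\ vdist (X := XS) y' y < eta.
Proof.
  intros Hy eta He. apply fint_dual_iff in Hy. destruct (Hdense y Hy eta He) as [b [[x Hx] Hb]].
  exists b, (evalX X x). split; [exists x; auto|]. apply dual_dist_lt_iff; auto.
Qed.

(* Start near a0, on the segment towards an interior point, at a point of D(T)
   reached in one step from (a0, x0). *)
Lemma chain_start_dual gam : 0 < gam ->
  exists y1 x1 r1, T y1 x1 /\ fint XS g y1 /\ chain X T a0 y1 x1 r1 /\
    gval y1 - gval a0 - gam < r1.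
Proof.
  intro Hgam. destruct Hint as [c1 Hc1]. apply fint_dual_iff in Hc1.
  destruct HD as [x0 Hx0]. assert (Ha0 : dom g a0) by apply (HT _ _ Hx0).
  set (e := gam / 4). assert (He : 0 < e) by (unfold e; lra).
  destruct (fint_segment_near_start XS g fconvex_dual flsc_dual a0 c1 e Ha0 Hc1 He)
    as [s0 [Hs0 Hss]].
  set (A0 := Rabs (c1 x0 - a0 x0) + 1).
  assert (HA0 : 0 < A0) by (unfold A0; pose proof (Rabs_pos (c1 x0 - a0 x0)); lra).
  set (tau := Rmin s0 (e / A0)).
  assert (Htau : 0 < tau) by (apply Rmin_glb_lt; [lra| apply Rdiv_lt_0_compat; lra]).
  assert (Htau2 : tau <= e / A0) by apply Rmin_r.
  set (p1 := segment XS a0 c1 tau).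
  destruct (Hss tau ltac:(split; [lra|apply Rmin_l])) as [Hp1i Hp1v]. fold p1 in Hp1i, Hp1v.
  assert (Hp1x : Rabs (p1 x0 - a0 x0) < e).
  { change (p1 x0) with ((1 - tau) * a0 x0 + tau * c1 x0).
    replace ((1 - tau) * a0 x0 + tau * c1 x0 - a0 x0) with (tau * (c1 x0 - a0 x0)) by ring.
    rewrite Rabs_mult, Rabs_right by lra.
    apply Rle_lt_trans with (e / A0 * Rabs (c1 x0 - a0 x0)).
    - apply Rmult_le_compat_r; [apply Rabs_pos|auto].
    - apply (Rmult_lt_reg_r A0); [lra|].
      replace (e / A0 * Rabs (c1 x0 - a0 x0) * A0) with (e * Rabs (c1 x0 - a0 x0)) by (field; lra).
      unfold A0. nra. }
  destruct (fint_near XS g fconvex_dual flsc_dual p1 e Hp1i He) as [d1 [Hd1 Hnear]].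
  set (eta := Rmin d1 (e / (vnorm X x0 + 1))).
  assert (Heta : 0 < eta).
  { apply Rmin_glb_lt; [lra|]. apply Rdiv_lt_0_compat; [lra|]. pose proof (vnorm_nonneg x0); lra. }
  destruct (Sg_T_dense p1 Hp1i eta Heta) as [y1 [s1 [[x1 [Hx1 _]] Hy1]]].
  destruct (Hnear y1 ltac:(eapply Rlt_le_trans; [exact Hy1|apply Rmin_l])) as [Hy1i Hy1v].
  pose proof (dual_dist_eval_lt X p1 y1 x0 e ltac:(eapply Rlt_le_trans; [exact Hy1|apply Rmin_r]))
    as Hy1x.
  exists y1, x1, (0 + y1 x0 - a0 x0). split; [auto|]. split; [auto|].
  split; [apply chain_extend; [apply chain_start|]; auto|].
  apply Rabs_def2 in Hp1x. apply Rabs_def2 in Hy1x. apply Rabs_def2 in Hy1v.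
  apply Rabs_def2 in Hp1v. unfold e in *. lra.
Qed.

Lemma chain_along_dual y1 x1 r1 q eps delta :
  T y1 x1 -> fint XS g y1 -> fint XS g q -> chain X T a0 y1 x1 r1 -> 0 < eps -> 0 < delta ->
  exists y x r, T y x /\ vdist (X := XS) y q < delta /\ chain X T a0 y x r /\
    r1 + gval y - gval y1 - eps <= r.
Proof.
  intros Hx1 Hy1 Hq Hr1 He Hd.
  destruct (Sg_chain_exists XS g fconvex_dual flsc_dual Sg_T Sg_T_subgrad Sg_T_dense
              y1 (evalX X x1) q eps delta Hy1 Hq ltac:(exists x1; auto) He Hd)
    as [N [ys [ss [Hys0 [Hss0 [HSk [HyN HE]]]]]]].
  destruct (choice_upto (fun k x => T (ys k) x /\ ss k = evalX X x /\ (k = O -> x = x1)) N)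
    as [xs Hxs]; [exact (inhabits x1)| |].
  { intros [|k] Hk; [exists x1; rewrite Hys0, Hss0; auto|].
    destruct (HSk (S k) Hk) as [x [Hx Hs]]. exists x. repeat split; auto. discriminate. }
  pose proof (chain_sum X T a0 N ys xs r1) as Hch.
  rewrite Hys0, (proj2 (proj2 (Hxs O (Nat.le_0_l N))) eq_refl) in Hch.
  specialize (Hch Hr1 (fun k Hk => proj1 (Hxs k Hk))).
  eexists _, _, _. split; [apply (Hxs N (le_n N))|]. split; [exact HyN|]. split; [exact Hch|].
  destruct (chain_sum_sandwich XS g N ys ss (fun k Hk => Sg_T_subgrad _ _ (HSk k Hk)))
    as [_ Hsw].
  rewrite sumR_minus in HE. rewrite Hys0 in Hsw.
  rewrite (sumR_ext _ (fun k => ss k (vadd XS (ys (S k)) (vopp XS (ys k))))); [lra|].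
  intros k Hk. destruct (Hxs k ltac:(lia)) as [_ [-> _]]. simpl. ring.
Qed.

(* Final step to a through a point y near q1: the subgradient inequality at y,
   tested at 2y - a (which is near q2 = 2 q1 - a), controls <x, a - y>. *)
Lemma chain_finish_dual a gam : dom g a -> 0 < gam ->
  exists q delta, fint XS g q /\ 0 < delta /\ forall y x r, T y x -> vdist (X := XS) y q < delta ->
    chain X T a0 y x r -> exists r', hset T a0 a r' /\ r + gval a - gval y - gam <= r'.
Proof.
  intros Ha Hgam. destruct Hint as [c1 Hc1]. apply fint_dual_iff in Hc1.
  set (e := gam / 6). assert (He : 0 < e) by (unfold e; lra).
  destruct (fint_segment_near_start XS g fconvex_dual flsc_dual a c1 e Ha Hc1 He)
    as [t0 [Ht0 Hst]].
  set (t := t0 / 2).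
  set (q1 := segment XS a c1 t). set (q2 := segment XS a c1 (2 * t)).
  destruct (Hst t ltac:(unfold t; lra)) as [Hq1i Hq1v].
  destruct (Hst (2*t) ltac:(unfold t; lra)) as [Hq2i Hq2v].
  fold q1 in Hq1i, Hq1v. fold q2 in Hq2i, Hq2v.
  destruct (fint_continuous XS g fconvex_dual flsc_dual q1 Hq1i e He) as [d2 [Hd2 Hc2]].
  destruct (fint_continuous XS g fconvex_dual flsc_dual q2 Hq2i e He) as [d3 [Hd3 Hc3]].
  exists q1, (Rmin d2 (d3 / 2)). split; [auto|]. split; [apply Rmin_glb_lt; lra|].
  intros y x r Hx Hy Hr.
  pose proof (Rmin_l d2 (d3 / 2)). pose proof (Rmin_r d2 (d3 / 2)).
  exists (r + a x - y x). split; [apply chain_hset; auto|].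
  set (z := vadd XS (vscal XS 2 y) (vopp XS a)).
  assert (Hzq2 : vdist (X := XS) z q2 < d3).
  { replace q2 with (vadd XS (vscal XS 2 q1) (vopp XS a))
      by (apply dual_ext; intro w; unfold q2, q1, segment; simpl; ring).
    unfold z. rewrite vdist_scal_add, Rabs_right by lra. lra. }
  destruct (Hc3 z Hzq2) as [Hzd Hzv].
  destruct (Hc2 y ltac:(lra)) as [Hyd Hyv].
  pose proof (subgrad_le XS g y (evalX X x) z (Sg_T_subgrad y _ ltac:(exists x; auto)) Hzd)
    as Hsub.
  change (z x - y x <= gval z - gval y) in Hsub.
  assert (Ez : z x = 2 * y x - a x) by (unfold z; simpl; ring). rewrite Ez in Hsub.
  apply Rabs_def2 in Hq1v. apply Rabs_def2 in Hq2v. apply Rabs_def2 in Hzv. apply Rabs_def2 in Hyv.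
  unfold e in *. lra.
Qed.

Lemma hset_sup_dual a : dom g a -> ER_sup (hset T a0 a) (ER_minus (g a) (g a0)).
Proof.
  intro Ha. destruct HD as [x0 Hx0]. assert (Ha0 : dom g a0) by apply (HT _ _ Hx0).
  apply ER_sup_intro; [intros r Hr; apply (hset_le X T a0 g HT a r Hr Ha0)|].
  intros c Hc.
  rewrite (fdom_Fin XS g a Ha), (fdom_Fin XS g a0 Ha0) in Hc. simpl in Hc.
  set (gam := (gval a - gval a0 - c) / 4). assert (Hgam : 0 < gam) by (unfold gam; lra).
  destruct (chain_finish_dual a gam Ha Hgam) as [q [delta [Hq [Hdelta Hfin]]]].
  destruct (chain_start_dual gam Hgam) as [y1 [x1 [r1 [Hx1 [Hy1 [Hr1 Hr1v]]]]]].
  destruct (chain_along_dual y1 x1 r1 q gam delta Hx1 Hy1 Hq Hr1 Hgam Hdelta)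
    as [y [x [r [Hx [Hy [Hr Hrv]]]]]].
  destruct (Hfin y x r Hx Hy Hr) as [r' [Hr' Hr'v]].
  exists r'. split; auto. unfold gam in *. lra.
Qed.

End DualChains.

Lemma dfun_telescope (Y : Banach) (s : nat -> dual Y) (y : nat -> Y) N :
  s N (y N) - s O (y O) =
  sumR (fun i => s (S i) (y i) - s i (y i)) N +
  sumR (fun i => s (S i) (vadd Y (y (S i)) (vopp Y (y i)))) N.
Proof. induction N; cbn [sumR]; [ring|]. rewrite dfun_sub. lra. Qed.

Section ConjugateOnX.
Variable X : Banach.
Variable g : dual X -> ER.
Hypothesis Hprop : proper g.

Definition conjX_set (x : X) (v : R) := exists b r, g b = Fin r /\ v = b x - r.

Lemma conjX_set_ne x : exists v, conjX_set x v.
Proof.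
  destruct Hprop as [b Hb]. unfold dom in Hb. destruct (g b) as [r|] eqn:E; [|congruence].
  exists (b x - r), b, r. auto.
Qed.

Definition conjX (x : X) : ER :=
  match excluded_middle_informative (bound (conjX_set x)) with
  | left Hb => Fin (proj1_sig (completeness _ Hb (conjX_set_ne x)))
  | right _ => PInf
  end.

Lemma conjX_ub x v : conjX x = Fin v -> forall b r, g b = Fin r -> b x - r <= v.
Proof.
  unfold conjX. destruct (excluded_middle_informative _) as [Hbd|Hbd]; [|congruence].
  destruct (completeness _ _ _) as [l [Hl1 Hl2]]. simpl. intros [= <-] b0 r Hr.
  apply Hl1. exists b0, r. auto.
Qed.

Lemma conjX_approx x v : conjX x = Fin v -> forall eps, 0 < eps ->
  exists b r, g b = Fin r /\ v - eps < b x - r.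
Proof.
  unfold conjX. destruct (excluded_middle_informative _) as [Hbd|Hbd]; [|congruence].
  destruct (completeness _ _ _) as [l [Hl1 Hl2]]. simpl. intros [= <-] eps He.
  apply NNPP. intro Hn.
  assert (l <= l - eps); [|lra].
  apply Hl2. intros w [b [r [Hr ->]]]. destruct (Rle_or_lt (b x - r) (l - eps)); auto.
  exfalso. apply Hn. exists b, r. split; auto; lra.
Qed.

Lemma conjX_le x M : (forall b r, g b = Fin r -> b x - r <= M) ->
  exists v, conjX x = Fin v /\ v <= M.
Proof.
  intro H. unfold conjX. destruct (excluded_middle_informative _) as [Hb|Hb].
  - destruct (completeness _ _ _) as [l [Hl1 Hl2]]. simpl. exists l. split; auto.
    apply Hl2. intros w [b [r [Hr ->]]]. auto.
  - exfalso. apply Hb. exists M. intros w [b [r [Hr ->]]]. auto.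
Qed.

Lemma conjX_gt x c : ~ ER_le (conjX x) (Fin c) -> exists b r, g b = Fin r /\ c < b x - r.
Proof.
  intro H. destruct (conjX x) as [v|] eqn:E.
  - simpl in H. destruct (conjX_approx x v E (v - c) ltac:(lra)) as [b [r [Hr Hv]]].
    exists b, r. split; auto. lra.
  - apply NNPP. intro Hn.
    destruct (conjX_le x c) as [v [Hv _]]; [|congruence].
    intros b r Hr. destruct (Rle_or_lt (b x - r) c); auto. exfalso. eauto.
Qed.

Lemma conjX_not_le x b r c : g b = Fin r -> c < b x - r -> ~ ER_le (conjX x) (Fin c).
Proof.
  intros Hr Hc Hle. destruct (conjX x) as [v|] eqn:E; simpl in Hle; auto.
  pose proof (conjX_ub x v E b r Hr). lra.
Qed.

Lemma fdom_conjX_iff x : fdom X conjX x <-> dom_conj_X g x.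
Proof.
  split.
  - intro H. unfold fdom in H. destruct (conjX x) as [v|] eqn:E; [|congruence].
    exists v. apply conjX_ub; auto.
  - intros [M HM]. destruct (conjX_le x M HM) as [v [Hv _]]. unfold fdom. congruence.
Qed.

Lemma fint_conjX_iff x : fint X conjX x <-> X_interior (dom_conj_X g) x.
Proof.
  split; intros [r [Hr H]]; exists r; split; auto; intros y Hy; apply fdom_conjX_iff; auto.
Qed.

Lemma fconvex_conjX : fconvex X conjX.
Proof.
  intros p q t Ht.
  destruct (conjX p) as [vp|] eqn:Ep; [|destruct (conjX q); apply ER_le_PInf].
  destruct (conjX q) as [vq|] eqn:Eq; [|apply ER_le_PInf].
  destruct (conjX_le (segment X p q t) ((1 - t) * vp + (1 - (1 - t)) * vq)) as [v [Hv Hle]].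
  { intros b r Hr. rewrite dfun_segment.
    pose proof (conjX_ub p vp Ep b r Hr). pose proof (conjX_ub q vq Eq b r Hr). nra. }
  rewrite Hv. simpl. auto.
Qed.

Lemma flsc_conjX : flsc X conjX.
Proof.
  intros y c Hc. destruct (conjX_gt y c Hc) as [b [r [Hr Hb]]].
  destruct (dfun_lipschitz X b) as [K [HK HKb]].
  exists ((b y - r - c) / K). split; [apply Rdiv_lt_0_compat; lra|].
  intros z Hz. apply (conjX_not_le z b r c Hr).
  specialize (HKb z y). apply Rabs_le_between in HKb.
  assert (K * vdist z y < b y - r - c); [|lra].
  apply (Rmult_lt_reg_l (/K)); [apply Rinv_0_lt_compat; lra|].
  rewrite <- Rmult_assoc, Rinv_l by lra. rewrite Rmult_1_l, Rmult_comm. exact Hz.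
Qed.

Lemma conjX_at_subdiff b x : subdiff g b x -> exists r, g b = Fin r /\ conjX x = Fin (b x - r).
Proof.
  intros [Hd Hs]. unfold dom in Hd. destruct (g b) as [r|] eqn:Er; [|congruence].
  exists r. split; auto.
  destruct (conjX_le x (b x - r)) as [v [Hv Hle]].
  { intros b' r' Hr'. specialize (Hs b'). rewrite Hr' in Hs. simpl in Hs. lra. }
  rewrite Hv. f_equal. pose proof (conjX_ub x v Hv b r Er). lra.
Qed.

Lemma subdiff_subgrad_conjX b x : subdiff g b x -> subgrad X conjX x b.
Proof.
  intro H. destruct (conjX_at_subdiff b x H) as [r [Hr Hx]].
  split; [unfold fdom; congruence|].
  intro z. rewrite Hx. destruct (conjX z) as [w|] eqn:Ez; simpl; auto.
  pose proof (conjX_ub z w Ez b r Hr). lra.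
Qed.

End ConjugateOnX.

Definition vec := nat -> R.
Definition dot (l u : vec) (k : nat) := sumR (fun j => l j * u j) k.

Lemma dot_add l u v k : dot l (fun j => u j + v j) k = dot l u k + dot l v k.
Proof. unfold dot. induction k; simpl; [ring|]. rewrite IHk. ring. Qed.

Lemma dot_scal l u c k : dot l (fun j => c * u j) k = c * dot l u k.
Proof. unfold dot. induction k; simpl; [ring|]. rewrite IHk. ring. Qed.

Lemma dot_ext l l' u u' k :
  (forall j, (j < k)%nat -> l j * u j = l' j * u' j) -> dot l u k = dot l' u' k.
Proof. intros H. unfold dot. apply sumR_ext. auto. Qed.

Definition supported (k : nat) (u : vec) := forall j, (k <= j)%nat -> u j = 0.

Definition unit_vec (k : nat) : vec := fun j => if Nat.eqb j k then 1 else 0.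

Section HahnBanach.
Variable p : vec -> R.
Hypothesis psub : forall u v, p (fun j => u j + v j) <= p u + p v.
Hypothesis phom : forall t u, 0 < t -> p (fun j => t * u j) = t * p u.
Hypothesis ppos : forall u, 0 <= p u.
Variable w : vec.

(* lam extends t |-> t from R w to R w + R^k, dominated by p. *)
Definition hb_extension (k : nat) (lam : vec) :=
  forall t u, supported k u -> t + dot lam u k <= p (fun j => t * w j + u j).

Lemma hb_extension_0 : 1 <= p w -> hb_extension 0 (fun _ => 0).
Proof.
  intros pw t u Hu. unfold dot. simpl.
  replace (fun j => t * w j + u j) with (fun j => t * w j)
    by (apply functional_extensionality; intro j; rewrite (Hu j) by lia; ring).
  destruct (Rlt_or_le 0 t) as [Ht|Ht].
  - rewrite phom by auto. nra.
  - pose proof (ppos (fun j => t * w j)). lra.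
Qed.

Section Step.
Variable k : nat.
Variable lam : vec.
Hypothesis IH : hb_extension k lam.
Notation e := (unit_vec k).

Lemma hb_gap : exists al,
  (forall t1 u1, supported k u1 ->
     t1 + dot lam u1 k - p (fun j => t1 * w j + (u1 j - e j)) <= al) /\
  (forall t2 u2, supported k u2 ->
     al <= p (fun j => t2 * w j + (u2 j + e j)) - t2 - dot lam u2 k).
Proof.
  set (Lo := fun a => exists t1 u1, supported k u1 /\
                 a = t1 + dot lam u1 k - p (fun j => t1 * w j + (u1 j - e j))).
  assert (Key : forall t1 u1 t2 u2, supported k u1 -> supported k u2 ->
       t1 + dot lam u1 k - p (fun j => t1 * w j + (u1 j - e j)) <=
       p (fun j => t2 * w j + (u2 j + e j)) - t2 - dot lam u2 k).
  { intros t1 u1 t2 u2 H1 H2.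
    assert (HS : supported k (fun j => u1 j + u2 j)) by (intros j Hj; rewrite H1, H2 by auto; ring).
    pose proof (IH (t1 + t2) _ HS). rewrite dot_add in H.
    pose proof (psub (fun j => t1 * w j + (u1 j - e j)) (fun j => t2 * w j + (u2 j + e j))).
    cbv beta in H0.
    replace (fun j => t1 * w j + (u1 j - e j) + (t2 * w j + (u2 j + e j))) with
      (fun j => (t1 + t2) * w j + (u1 j + u2 j)) in H0
      by (apply functional_extensionality; intro j; ring).
    cbv beta in *. lra. }
  assert (Hsupp0 : supported k (fun _ => 0)) by (intros j _; auto).
  destruct (completeness Lo) as [al [Hub Hlub]].
  - exists (p (fun j => 0 * w j + (0 + e j)) - 0 - dot lam (fun _ => 0) k).
    intros a [t1 [u1 [Hu1 ->]]]. apply Key; auto.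
  - eexists. exists 0, (fun _ => 0). split; auto.
  - exists al. split.
    + intros t1 u1 Hu1. apply Hub. exists t1, u1. auto.
    + intros t2 u2 Hu2. apply Hlub. intros a [t1 [u1 [Hu1 ->]]]. apply Key; auto.
Qed.

(* Dividing by |s| reduces to the bounds defining al. *)
Lemma hb_step_bound al :
  (forall t1 u1, supported k u1 ->
     t1 + dot lam u1 k - p (fun j => t1 * w j + (u1 j - e j)) <= al) ->
  (forall t2 u2, supported k u2 ->
     al <= p (fun j => t2 * w j + (u2 j + e j)) - t2 - dot lam u2 k) ->
  forall t u s, supported k u ->
    t + dot lam u k + al * s <= p (fun j => t * w j + (u j + s * e j)).
Proof.
  intros Hlo Hup t u s Hu.
  set (v := fun j => t * w j + (u j + s * e j)).
  assert (Hdiv : forall c, 0 < c -> supported k (fun j => u j / c) /\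
            dot lam (fun j => u j / c) k = / c * dot lam u k).
  { intros c Hc. split; [intros j Hj; rewrite Hu by auto; unfold Rdiv; ring|].
    rewrite <- dot_scal. apply dot_ext. intros; unfold Rdiv; ring. }
  destruct (Rtotal_order s 0) as [Hneg|[Hz|Hpos]].
  - destruct (Hdiv (- s) ltac:(lra)) as [Hs1 Hd].
    pose proof (Hlo (t / - s) _ Hs1) as H. cbv beta in H.
    replace (fun j => t / - s * w j + (u j / - s - e j)) with (fun j => / - s * v j) in H
      by (apply functional_extensionality; intro j; unfold v; field; lra).
    rewrite phom, Hd in H by (apply Rinv_0_lt_compat; lra).
    apply (Rmult_le_compat_l (- s)) in H; [|lra].
    replace (- s * (t / - s + / - s * dot lam u k - / - s * p v))
      with (t + dot lam u k - p v) in H by (field; lra).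
    lra.
  - subst s. replace v with (fun j => t * w j + u j)
      by (apply functional_extensionality; intro j; unfold v; ring).
    pose proof (IH t u Hu). lra.
  - destruct (Hdiv s Hpos) as [Hs1 Hd].
    pose proof (Hup (t / s) _ Hs1) as H. cbv beta in H.
    replace (fun j => t / s * w j + (u j / s + e j)) with (fun j => / s * v j) in H
      by (apply functional_extensionality; intro j; unfold v; field; lra).
    rewrite phom, Hd in H by (apply Rinv_0_lt_compat; lra).
    apply (Rmult_le_compat_l s) in H; [|lra].
    replace (s * (/ s * p v - t / s - / s * dot lam u k)) with (p v - t - dot lam u k) in H
      by (field; lra).
    lra.
Qed.

Lemma hb_step : exists lam', hb_extension (S k) lam'.
Proof.
  destruct hb_gap as [al [Hlo Hup]].
  exists (fun j => if Nat.eqb j k then al else lam j).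
  intros t u Hu.
  set (u' := fun j => if Nat.eqb j k then 0 else u j).
  assert (Hu' : supported k u').
  { intros j Hj. unfold u'. destruct (Nat.eqb j k) eqn:E; auto. apply Hu.
    apply Nat.eqb_neq in E. lia. }
  replace (dot (fun j => if Nat.eqb j k then al else lam j) u (S k)) with (dot lam u' k + al * u k).
  2:{ unfold dot at 2. cbn [sumR]. rewrite Nat.eqb_refl. f_equal.
      apply dot_ext. intros j Hj. unfold u'. destruct (Nat.eqb j k) eqn:E; auto.
      apply Nat.eqb_eq in E. lia. }
  replace (fun j => t * w j + u j) with (fun j => t * w j + (u' j + u k * e j)).
  2:{ apply functional_extensionality. intro j. unfold u', unit_vec.
      destruct (Nat.eqb j k) eqn:E; [apply Nat.eqb_eq in E; subst; ring|ring]. }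
  rewrite <- Rplus_assoc. apply (hb_step_bound al Hlo Hup t u' (u k) Hu').
Qed.

End Step.

Lemma hahn_banach_fin k : 1 <= p w -> exists lam, hb_extension k lam.
Proof.
  intro pw. induction k as [|k [lam IH]].
  - exists (fun _ => 0). apply hb_extension_0; auto.
  - apply (hb_step k lam IH).
Qed.

End HahnBanach.

Lemma glb_of_pos (S : R -> Prop) : (exists t, S t) -> (forall t, S t -> 0 < t) ->
  { m | (forall t, S t -> m <= t) /\ (forall eps, 0 < eps -> exists t, S t /\ t < m + eps) /\
        0 <= m }.
Proof.
  intros Hne Hpos.
  destruct (completeness (fun y => exists t, S t /\ y = - t)) as [l [Hub Hl]].
  { exists 0. intros y [t [Ht ->]]. specialize (Hpos t Ht). lra. }
  { destruct Hne as [t Ht]. exists (-t). eauto. }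
  exists (-l). split; [|split].
  - intros t Ht. assert (-t <= l) by (apply Hub; eauto). lra.
  - intros eps He. apply NNPP. intro Hn.
    assert (l <= l - eps); [|lra].
    apply Hl. intros y [t [Ht ->]]. destruct (Rle_or_lt (- l + eps) t); [lra|].
    exfalso. apply Hn. exists t. split; auto.
  - assert (l <= 0); [|lra]. apply Hl. intros y [t [Ht ->]]. specialize (Hpos t Ht). lra.
Qed.

Lemma sumR_nonneg (f : nat -> R) m : (forall i, 0 <= f i) -> 0 <= sumR f m.
Proof. intros Hf. induction m; cbn [sumR]; [lra|]. pose proof (Hf m). lra. Qed.

Lemma sumR_term_le (f : nat -> R) m j : (forall i, 0 <= f i) -> (j < m)%nat -> f j <= sumR f m.
Proof.
  intros Hf Hj. induction m; [lia|]. cbn [sumR].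
  pose proof (sumR_nonneg f m Hf). pose proof (Hf m).
  destruct (Nat.eq_dec j m) as [->|Hne]; [lra|]. pose proof (IHm ltac:(lia)). lra.
Qed.

Lemma Rabs_le_sum_Rabs (u : vec) n j : (j < n)%nat -> Rabs (u j) <= sumR (fun i => Rabs (u i)) n.
Proof. apply (sumR_term_le (fun i => Rabs (u i))). intro; apply Rabs_pos. Qed.

Lemma sum_Rabs_nonneg (u : vec) n : 0 <= sumR (fun i => Rabs (u i)) n.
Proof. apply sumR_nonneg. intro; apply Rabs_pos. Qed.

Section Separation.
Variable n : nat.
Variable G : vec -> Prop.
Hypothesis Gconv : forall u v th, G u -> G v -> 0 <= th <= 1 ->
  G (fun j => th * u j + (1 - th) * v j).
Hypothesis Gopen : forall v, G v -> exists rho, 0 < rho /\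
   forall u, (forall j, (j < n)%nat -> Rabs (u j - v j) < rho) -> G u.
Hypothesis G0 : forall u, (forall j, (j < n)%nat -> u j = 0) -> ~ G u.

Lemma G_ext a b : (forall j, (j < n)%nat -> a j = b j) -> G a -> G b.
Proof.
  intros H Ha. destruct (Gopen a Ha) as [rho [Hr Hu]]. apply Hu. intros j Hj.
  rewrite H, Rminus_diag, Rabs_R0 by auto. auto.
Qed.

(* The Minkowski gauge of the open convex neighbourhood w - G of 0 is sublinear,
   < 1 on w - G and >= 1 at w since 0 is not in G; a Hahn-Banach extension of
   t w |-> t below it separates G from 0. *)
Section Gauge.
Variable w : vec.
Hypothesis Hw : G w.

Definition shifted (u : vec) := G (fun j => w j - u j).
Definition gauge_set (u : vec) (t : R) := 0 < t /\ shifted (fun j => u j / t).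

Lemma shifted_ext a b : (forall j, (j < n)%nat -> a j = b j) -> shifted a -> shifted b.
Proof. intros H. apply G_ext. intros j Hj. rewrite H; auto. Qed.

Lemma shifted_convex a b th : shifted a -> shifted b -> 0 <= th <= 1 ->
  shifted (fun j => th * a j + (1 - th) * b j).
Proof.
  intros Ha Hb Ht. eapply G_ext; [|exact (Gconv _ _ th Ha Hb Ht)]. intros j _. cbv beta. ring.
Qed.

Lemma shifted_0 : shifted (fun _ => 0).
Proof. apply (G_ext w); [intros; ring|exact Hw]. Qed.

Lemma shifted_small u rho : 0 < rho ->
  (forall v, (forall j, (j < n)%nat -> Rabs (v j - w j) < rho) -> G v) ->
  forall c, 0 < c -> c * sumR (fun i => Rabs (u i)) n < rho -> shifted (fun j => c * u j).
Proof.
  intros Hr Hu c Hc Hsmall. apply Hu. intros j Hj.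
  replace (w j - c * u j - w j) with (- (c * u j)) by ring.
  rewrite Rabs_Ropp, Rabs_mult, Rabs_right by lra.
  pose proof (Rabs_le_sum_Rabs u n j Hj).
  apply Rle_lt_trans with (c * sumR (fun i => Rabs (u i)) n); [|auto].
  apply Rmult_le_compat_l; lra.
Qed.

Lemma gauge_set_ne u : exists t, gauge_set u t.
Proof.
  destruct (Gopen w Hw) as [rho [Hr Hu]].
  set (A := sumR (fun i => Rabs (u i)) n). pose proof (sum_Rabs_nonneg u n) as HA. fold A in HA.
  assert (Ht : 0 < A / rho + 1).
  { assert (0 <= A / rho) by (apply Rmult_le_pos; [lra| left; apply Rinv_0_lt_compat; lra]). lra. }
  exists (A / rho + 1). split; auto.
  apply (shifted_ext (fun j => / (A / rho + 1) * u j)); [intros; unfold Rdiv; ring|].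
  apply (shifted_small u rho Hr Hu); [apply Rinv_0_lt_compat; lra|].
  apply (Rmult_lt_reg_l (A / rho + 1)); [lra|].
  rewrite <- Rmult_assoc, Rinv_r, Rmult_1_l by lra. fold A.
  replace ((A / rho + 1) * rho) with (A + rho) by (field; lra). lra.
Qed.

Lemma gauge_set_pos u t : gauge_set u t -> 0 < t.
Proof. intros [H _]; auto. Qed.

Definition gauge (u : vec) : R :=
  proj1_sig (glb_of_pos (gauge_set u) (gauge_set_ne u) (gauge_set_pos u)).

Lemma gauge_spec u : (forall t, gauge_set u t -> gauge u <= t) /\
   (forall eps, 0 < eps -> exists t, gauge_set u t /\ t < gauge u + eps) /\ 0 <= gauge u.
Proof. unfold gauge. destruct (glb_of_pos _ _ _). simpl. auto. Qed.

Lemma gauge_nonneg u : 0 <= gauge u.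
Proof. apply gauge_spec. Qed.

Lemma gauge_set_up u t t' : gauge_set u t -> t <= t' -> gauge_set u t'.
Proof.
  intros [Ht HU] Htt. split; [lra|].
  assert (Hth : 0 <= t / t' <= 1).
  { split; [apply Rmult_le_pos; [lra|left; apply Rinv_0_lt_compat; lra]|].
    apply (Rmult_le_reg_r t'); [lra|]. unfold Rdiv. rewrite Rmult_assoc, Rinv_l by lra. lra. }
  eapply shifted_ext; [|exact (shifted_convex _ _ _ HU shifted_0 Hth)].
  intros j _. cbv beta. field. lra.
Qed.

Lemma gauge_hom c u : 0 < c -> gauge (fun j => c * u j) = c * gauge u.
Proof.
  intro Hc. destruct (gauge_spec u) as [A1 [A2 A3]].
  destruct (gauge_spec (fun j => c * u j)) as [B1 [B2 B3]].
  apply Rle_antisym; apply le_epsilon; intros eps He.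
  - destruct (A2 (eps / c)) as [t [[Ht Hut] Htl]]; [apply Rdiv_lt_0_compat; lra|].
    apply Rle_lt_trans with (c * t).
    + apply B1. split; [nra|]. eapply shifted_ext; [|exact Hut]. intros j _. cbv beta. field. lra.
    + apply (Rmult_lt_compat_l c) in Htl; [|lra].
      replace (c * (gauge u + eps / c)) with (c * gauge u + eps) in Htl by (field; lra). lra.
  - destruct (B2 eps He) as [t [[Ht Hut] Htl]].
    assert (H : gauge u <= t / c).
    { apply A1. split; [apply Rdiv_lt_0_compat; lra|].
      eapply shifted_ext; [|exact Hut]. intros j _. cbv beta. field. lra. }
    apply (Rmult_le_compat_l c) in H; [|lra].
    replace (c * (t / c)) with t in H by (field; lra). lra.
Qed.

Lemma gauge_sub u v : gauge (fun j => u j + v j) <= gauge u + gauge v.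
Proof.
  apply le_epsilon. intros eps He.
  destruct (gauge_spec u) as [_ [A2 _]]. destruct (gauge_spec v) as [_ [B2 _]].
  destruct (gauge_spec (fun j => u j + v j)) as [C1 _].
  destruct (A2 (eps/2) ltac:(lra)) as [t1 [[Ht1 HU1] H1]].
  destruct (B2 (eps/2) ltac:(lra)) as [t2 [[Ht2 HU2] H2]].
  assert (Hth : 0 <= t1 / (t1 + t2) <= 1).
  { split; [apply Rmult_le_pos; [lra|left; apply Rinv_0_lt_compat; lra]|].
    apply (Rmult_le_reg_r (t1 + t2)); [lra|].
    unfold Rdiv. rewrite Rmult_assoc, Rinv_l by lra. lra. }
  assert (H : gauge_set (fun j => u j + v j) (t1 + t2)).
  { split; [lra|].
    eapply shifted_ext; [|exact (shifted_convex _ _ _ HU1 HU2 Hth)].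
    intros j _. cbv beta. field. lra. }
  specialize (C1 _ H). lra.
Qed.

Lemma gauge_w : 1 <= gauge w.
Proof.
  destruct (Rle_or_lt 1 (gauge w)) as [h|h]; auto. exfalso.
  destruct (gauge_spec w) as [_ [A2 _]]. destruct (A2 (1 - gauge w) ltac:(lra)) as [t [Ht Htl]].
  destruct (gauge_set_up w t 1 Ht ltac:(lra)) as [_ HU].
  eapply G0; [|exact HU]. intros j _. cbv beta. field.
Qed.

Lemma gauge_lt_1 u : shifted u -> gauge u < 1.
Proof.
  intro HU. destruct (Gopen _ HU) as [rho [Hr Hrho]].
  set (A := sumR (fun i => Rabs (u i)) n). pose proof (sum_Rabs_nonneg u n) as HA. fold A in HA.
  set (th := rho / (2 * (A + 1))).
  assert (Hth : 0 < th) by (unfold th; apply Rdiv_lt_0_compat; lra).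
  assert (H : gauge_set u (/ (1 + th))).
  { split; [apply Rinv_0_lt_compat; lra|]. apply Hrho. intros j Hj.
    replace (w j - u j / / (1 + th) - (w j - u j)) with (- (th * u j)) by (field; lra).
    rewrite Rabs_Ropp, Rabs_mult, Rabs_right by lra.
    pose proof (Rabs_le_sum_Rabs u n j Hj). fold A in H.
    apply Rle_lt_trans with (th * A); [apply Rmult_le_compat_l; lra|].
    unfold th. apply (Rmult_lt_reg_r (2 * (A + 1))); [lra|].
    replace (rho / (2 * (A + 1)) * A * (2 * (A + 1))) with (rho * A) by (field; lra). nra. }
  destruct (gauge_spec u) as [A1 _]. specialize (A1 _ H).
  assert (/ (1 + th) < 1); [|lra].
  apply (Rmult_lt_reg_r (1 + th)); [lra|]. rewrite Rinv_l by lra. lra.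
Qed.

Lemma gauge_ext a b : (forall j, (j < n)%nat -> a j = b j) -> gauge a = gauge b.
Proof.
  intro H.
  assert (Hs : forall a b, (forall j, (j < n)%nat -> a j = b j) ->
            forall t, gauge_set a t -> gauge_set b t).
  { intros a' b' H' t [Ht HU]. split; auto.
    eapply shifted_ext; [|exact HU]. intros j Hj. cbv beta. rewrite H'; auto. }
  destruct (gauge_spec a) as [A1 [A2 _]]. destruct (gauge_spec b) as [B1 [B2 _]].
  apply Rle_antisym; apply le_epsilon; intros eps He.
  - destruct (B2 eps He) as [t [Ht Htl]].
    specialize (A1 t (Hs b a (fun j Hj => eq_sym (H j Hj)) t Ht)). lra.
  - destruct (A2 eps He) as [t [Ht Htl]]. specialize (B1 t (Hs a b H t Ht)). lra.
Qed.

Lemma gauge_0 : gauge (fun _ => 0) = 0.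
Proof.
  apply Rle_antisym; [|apply gauge_nonneg]. destruct (gauge_spec (fun _ => 0)) as [A1 _].
  apply le_epsilon. intros eps He. apply Rle_lt_trans with (eps/2); [|lra].
  apply A1. split; [lra|]. eapply shifted_ext; [|exact shifted_0]. intros j _. cbv beta. field. lra.
Qed.

Lemma separation_at : exists lam, forall v, G v -> 0 < dot lam v n.
Proof.
  destruct (hahn_banach_fin gauge gauge_sub gauge_hom gauge_nonneg w n gauge_w) as [lam Hlam].
  exists lam. intros v Hv.
  set (tr := fun (x : vec) j => if Nat.ltb j n then x j else 0).
  assert (Htr : forall x, supported n (tr x)).
  { intros x j Hj. unfold tr. destruct (Nat.ltb j n) eqn:E; auto. apply Nat.ltb_lt in E. lia. }
  assert (Htrj : forall x j, (j < n)%nat -> tr x j = x j).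
  { intros x j Hj. unfold tr. apply Nat.ltb_lt in Hj. rewrite Hj. auto. }
  pose proof (Hlam 1 (tr (fun j => - w j)) (Htr _)) as H1.
  rewrite (gauge_ext _ (fun _ => 0)), gauge_0 in H1 by (intros j Hj; rewrite Htrj by auto; ring).
  rewrite (dot_ext lam lam _ (fun j => -1 * w j)), dot_scal in H1
    by (intros j Hj; rewrite Htrj by auto; ring).
  pose proof (Hlam 0 (tr (fun j => w j - v j)) (Htr _)) as H2.
  rewrite (gauge_ext _ (fun j => w j - v j)) in H2 by (intros j Hj; rewrite Htrj by auto; ring).
  assert (HU : shifted (fun j => w j - v j)) by (eapply G_ext; [|exact Hv]; intros; cbv beta; ring).
  pose proof (gauge_lt_1 _ HU).
  rewrite (dot_ext lam lam _ (fun j => w j + -1 * v j)), dot_add, dot_scal in H2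
    by (intros j Hj; rewrite Htrj by auto; ring).
  lra.
Qed.

End Gauge.

Lemma separation_from_0 : exists lam, forall v, G v -> 0 < dot lam v n.
Proof.
  destruct (classic (exists w, G w)) as [[w Hw]|Hno].
  - apply (separation_at w Hw).
  - exists (fun _ => 0). intros v Hv. exfalso. eauto.
Qed.

End Separation.

Fixpoint maxR (f : nat -> R) (m : nat) : R :=
  match m with O => 0 | S k => Rmax (maxR f k) (f k) end.

Lemma maxR_ge f m j : (j < m)%nat -> f j <= maxR f m.
Proof.
  induction m; intro Hj; [lia|]. simpl. destruct (Nat.eq_dec j m) as [->|Hne]; [apply Rmax_r|].
  eapply Rle_trans; [apply IHm; lia|apply Rmax_l].
Qed.

Lemma maxR_lt f m e : 0 < e -> (forall j, (j < m)%nat -> f j < e) -> maxR f m < e.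
Proof.
  intros He H. induction m; simpl; auto.
  apply Rmax_lub_lt; [apply IHm; intros; apply H; lia|apply H; lia].
Qed.

Fixpoint lcomb {X : Banach} (lam : vec) (l : list X) (m : nat) : X :=
  match m with
  | O => vzero X
  | S k => vadd X (lcomb lam l k) (vscal X (lam k) (nth k l (vzero X)))
  end.

Lemma dfun_lcomb {X : Banach} (b : dual X) lam l m :
  b (lcomb lam l m) = dot lam (fun j => b (nth j l (vzero X))) m.
Proof.
  unfold dot. induction m; simpl; [apply dfun_zero|]. rewrite dfun_add, dfun_scal, IHm. ring.
Qed.

Lemma dfun_lcomb_sub {X : Banach} (a b : dual X) lam l m :
  b (lcomb lam l m) - a (lcomb lam l m) =
  dot lam (fun j => b (nth j l (vzero X)) - a (nth j l (vzero X))) m.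
Proof.
  rewrite !dfun_lcomb. unfold dot. rewrite <- sumR_minus. apply sumR_ext. intros; ring.
Qed.

Section WeakstarSeparation.
Variable X : Banach.
Variable g : dual X -> ER.
Hypothesis Hprop : proper g.
Hypothesis Hconv : convex g.
Variables (a : dual X) (c eps : R) (l : list X).
Hypothesis Heps : 0 < eps.
Hypothesis Hnbd : forall b : dual X,
  (forall x, In x l -> Rabs (b x - a x) < eps) -> ~ ER_le (g b) (Fin c).
Notation m := (length l).
Notation xj j := (nth j l (vzero X)).

(* The strict epigraph of g - c, seen through the coordinates (b - a)(x_j)
   up to eps: an open convex set of R^(m+1) avoiding 0 by the choice of l. *)
Definition epi_window (v : vec) := exists b r, g b = Fin r /\
  (forall j, (j < m)%nat -> Rabs (v j - (b (xj j) - a (xj j))) < eps) /\ r - c < v m.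

Lemma epi_window_convex u v th : epi_window u -> epi_window v -> 0 <= th <= 1 ->
  epi_window (fun j => th * u j + (1 - th) * v j).
Proof.
  intros [b1 [r1 [Hr1 [Hu1 Hu2]]]] [b2 [r2 [Hr2 [Hv1 Hv2]]]] Hth.
  destruct (Req_dec th 0) as [->|H0].
  { exists b2, r2. repeat split; auto; [|lra].
    intros j Hj. replace (0 * u j + (1 - 0) * v j) with (v j) by ring. auto. }
  destruct (Req_dec th 1) as [->|H1].
  { exists b1, r1. repeat split; auto; [|lra].
    intros j Hj. replace (1 * u j + (1 - 1) * v j) with (u j) by ring. auto. }
  set (b := dual_add X (dual_scal X th b1) (dual_scal X (1 - th) b2)).
  assert (Hcb := Hconv b1 b2 b th ltac:(lra) ltac:(intro x; simpl; ring)).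
  rewrite Hr1, Hr2 in Hcb. simpl in Hcb.
  destruct (g b) as [r|] eqn:Eb; simpl in Hcb; [|contradiction].
  exists b, r. repeat split; auto; [|nra].
  intros j Hj. specialize (Hu1 j Hj). specialize (Hv1 j Hj).
  apply Rabs_def2 in Hu1. apply Rabs_def2 in Hv1.
  replace (th * u j + (1 - th) * v j - (b (xj j) - a (xj j))) with
    (th * (u j - (b1 (xj j) - a (xj j))) + (1 - th) * (v j - (b2 (xj j) - a (xj j))))
    by (unfold b; simpl; ring).
  apply Rabs_def1; nra.
Qed.

Lemma epi_window_open v : epi_window v -> exists rho, 0 < rho /\
  forall u, (forall j, (j < S m)%nat -> Rabs (u j - v j) < rho) -> epi_window u.
Proof.
  intros [b [r [Hr [Hv1 Hv2]]]].
  set (f := fun j => Rabs (v j - (b (xj j) - a (xj j)))).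
  assert (HM : maxR f m < eps) by (apply maxR_lt; auto).
  set (rho := Rmin (eps - maxR f m) (v m - (r - c))).
  assert (Hrho1 : rho <= eps - maxR f m) by apply Rmin_l.
  assert (Hrho2 : rho <= v m - (r - c)) by apply Rmin_r.
  exists rho. split; [apply Rmin_glb_lt; lra|].
  intros u Hu. exists b, r. repeat split; auto.
  - intros j Hj. pose proof (Hu j ltac:(lia)). pose proof (maxR_ge f m j Hj).
    change (f j) with (Rabs (v j - (b (xj j) - a (xj j)))) in H0.
    pose proof (Rabs_triang (u j - v j) (v j - (b (xj j) - a (xj j)))).
    replace (u j - v j + (v j - (b (xj j) - a (xj j)))) with (u j - (b (xj j) - a (xj j))) in H1
      by ring.
    lra.
  - pose proof (Hu m ltac:(lia)). apply Rabs_def2 in H. lra.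
Qed.

Lemma epi_window_not_0 u : (forall j, (j < S m)%nat -> u j = 0) -> ~ epi_window u.
Proof.
  intros Hu [b [r [Hr [Hu1 Hu2]]]].
  apply (Hnbd b).
  - intros x Hx. destruct (In_nth l x (vzero X) Hx) as [j [Hj Hjx]].
    specialize (Hu1 j Hj). rewrite Hu, Hjx in Hu1 by lia.
    rewrite <- Rabs_Ropp. replace (- (b x - a x)) with (0 - (b x - a x)) by ring. auto.
  - rewrite Hr. simpl. rewrite Hu in Hu2 by lia. lra.
Qed.

Section Functional.
Variable lam : vec.
Hypothesis Hlam : forall v, epi_window v -> 0 < dot lam v (S m).
Notation xv := (lcomb lam l m).

Lemma window_functional_pos b r s (y : vec) : g b = Fin r -> r - c < s ->
  (forall j, (j < m)%nat -> Rabs (y j) < eps) ->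
  0 < dot lam (fun j => b (xj j) - a (xj j) - y j) m + lam m * s.
Proof.
  intros Hr Hs Hy.
  set (v := fun j => if Nat.ltb j m then b (xj j) - a (xj j) - y j else s).
  assert (Hvj : forall j, (j < m)%nat -> v j = b (xj j) - a (xj j) - y j).
  { intros j Hj. unfold v. rewrite (proj2 (Nat.ltb_lt j m) Hj). auto. }
  assert (Gv : epi_window v).
  { exists b, r. repeat split; auto.
    - intros j Hj. rewrite Hvj by auto.
      replace (b (xj j) - a (xj j) - y j - (b (xj j) - a (xj j))) with (- y j) by ring.
      rewrite Rabs_Ropp. auto.
    - unfold v. rewrite Nat.ltb_irrefl. auto. }
  pose proof (Hlam v Gv) as H. unfold dot in H. cbn [sumR] in H. fold (dot lam v m) in H.
  unfold v at 2 in H. rewrite Nat.ltb_irrefl in H.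
  rewrite (dot_ext lam lam v (fun j => b (xj j) - a (xj j) - y j)) in H; auto.
  intros j Hj. rewrite Hvj; auto.
Qed.

Lemma window_functional_xv b r s : g b = Fin r -> r - c < s -> 0 < (b xv - a xv) + lam m * s.
Proof.
  intros Hr Hs.
  pose proof (window_functional_pos b r s (fun _ => 0) Hr Hs
                ltac:(intros; cbv beta; rewrite Rabs_R0; auto)) as H.
  rewrite dfun_lcomb_sub.
  rewrite (dot_ext lam lam _ (fun j => b (xj j) - a (xj j) - 0)); [auto|].
  intros; ring.
Qed.

Lemma window_functional_last_nonneg : 0 <= lam m.
Proof.
  destruct Hprop as [b1 Hb1]. unfold dom in Hb1. destruct (g b1) as [r1|] eqn:Er1; [|congruence].
  destruct (Rle_or_lt 0 (lam m)) as [h|h]; auto. exfalso.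
  set (D1 := b1 xv - a xv).
  set (s := Rmax (r1 - c + 1) 0 + (Rabs D1 + 1) / (- lam m)).
  assert (Hs0 : 0 <= (Rabs D1 + 1) / - lam m).
  { apply Rmult_le_pos; [pose proof (Rabs_pos D1); lra| left; apply Rinv_0_lt_compat; lra]. }
  pose proof (Rmax_l (r1 - c + 1) 0). pose proof (Rmax_r (r1 - c + 1) 0).
  pose proof (window_functional_xv b1 r1 s Er1 ltac:(unfold s; lra)) as Hw. fold D1 in Hw.
  unfold s in Hw. rewrite Rmult_plus_distr_l in Hw.
  replace (lam m * ((Rabs D1 + 1) / - lam m)) with (- (Rabs D1 + 1)) in Hw by (field; lra).
  assert (lam m * Rmax (r1 - c + 1) 0 <= 0) by nra.
  pose proof (Rle_abs D1). lra.
Qed.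

Lemma window_minorant : 0 < lam m ->
  exists xh beta, (forall b r, g b = Fin r -> b xh - r <= beta) /\ c <= a xh - beta.
Proof.
  intro Hpos.
  exists (vscal X (- / lam m) xv), (a (vscal X (- / lam m) xv) - c). split; [|lra].
  intros b r Hr. rewrite !dfun_scal.
  assert (HH : 0 <= (b xv - a xv) + lam m * (r - c)).
  { destruct (Rle_or_lt 0 ((b xv - a xv) + lam m * (r - c))) as [h|h]; auto. exfalso.
    set (e := - ((b xv - a xv) + lam m * (r - c)) / (2 * lam m)).
    assert (0 < e) by (unfold e; apply Rdiv_lt_0_compat; lra).
    pose proof (window_functional_xv b r (r - c + e) Hr ltac:(lra)) as Hw.
    replace (b xv - a xv + lam m * (r - c + e)) with (((b xv - a xv) + lam m * (r - c)) / 2) in Hw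
      by (unfold e; field; lra).
    lra. }
  apply (Rmult_le_reg_l (lam m)); auto.
  replace (lam m * (- / lam m * b xv - r)) with (- b xv - lam m * r) by (field; lra).
  replace (lam m * (- / lam m * a xv - c)) with (- a xv - lam m * c) by (field; lra).
  lra.
Qed.

(* With lam m = 0 the functional only sees the x_j: it gives a direction xv
   along which every b in dom g exceeds a by a fixed amount. *)
Lemma window_direction : lam m = 0 ->
  exists xv th, 0 < th /\ forall b r, g b = Fin r -> a xv + th <= b xv.
Proof.
  intro Hzero. destruct Hprop as [b1 Hb1]. unfold dom in Hb1.
  destruct (g b1) as [r1|] eqn:Er1; [|congruence].
  set (S2 := sumR (fun j => lam j * lam j) m).
  set (A := sumR (fun j => Rabs (lam j)) m).
  assert (HA : 0 <= A) by (apply sumR_nonneg; intro; apply Rabs_pos).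
  set (tau := eps / (2 * (A + 1))).
  assert (Htau : 0 < tau) by (unfold tau; apply Rdiv_lt_0_compat; lra).
  assert (HS2 : 0 < S2).
  { destruct (Rle_or_lt S2 0) as [h|h]; auto. exfalso.
    assert (Hz : forall j, (j < m)%nat -> lam j = 0).
    { intros j Hj.
      pose proof (sumR_term_le (fun j => lam j * lam j) m j (fun i => ltac:(nra)) Hj).
      fold S2 in H. nra. }
    pose proof (window_functional_xv b1 r1 (r1 - c + 1) Er1 ltac:(lra)) as H.
    rewrite Hzero, dfun_lcomb_sub in H.
    rewrite (dot_ext lam (fun _ => 0) _ (fun _ => 0)) in H
      by (intros j Hj; rewrite Hz by auto; ring).
    unfold dot in H. rewrite (sumR_ext _ (fun _ => 0)) in H by (intros; ring).
    assert (sumR (fun _ => 0) m = 0) by (clear; induction m; cbn [sumR]; [auto|rewrite IHn; ring]).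
    lra. }
  exists xv, (tau * S2). split; [nra|].
  intros b r Hr.
  assert (Hy : forall j, (j < m)%nat -> Rabs (tau * lam j) < eps).
  { intros j Hj. rewrite Rabs_mult, Rabs_right by lra.
    pose proof (sumR_term_le (fun j => Rabs (lam j)) m j (fun i => Rabs_pos _) Hj). fold A in H.
    apply Rle_lt_trans with (tau * A); [apply Rmult_le_compat_l; lra|].
    unfold tau. apply (Rmult_lt_reg_r (2 * (A + 1))); [lra|].
    replace (eps / (2 * (A + 1)) * A * (2 * (A + 1))) with (eps * A) by (field; lra). nra. }
  pose proof (window_functional_pos b r (r - c + 1) (fun j => tau * lam j) Hr ltac:(lra) Hy) as H.
  rewrite Hzero in H.
  rewrite (dot_ext lam lam _ (fun j => (b (xj j) - a (xj j)) + (-tau) * lam j)), dot_add, dot_scal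
    in H by (intros; ring).
  rewrite <- dfun_lcomb_sub in H. unfold dot at 1 in H. fold S2 in H. lra.
Qed.

End Functional.

Lemma weakstar_minorant_or_direction :
  (exists xh beta, (forall b r, g b = Fin r -> b xh - r <= beta) /\ c <= a xh - beta) \/
  (exists xv th, 0 < th /\ forall b r, g b = Fin r -> a xv + th <= b xv).
Proof.
  destruct (separation_from_0 (S m) epi_window epi_window_convex epi_window_open
              epi_window_not_0) as [lam Hlam].
  destruct (Rle_lt_or_eq_dec 0 (lam m) (window_functional_last_nonneg lam Hlam))
    as [Hpos|Hzero].
  - left. exact (window_minorant lam Hlam Hpos).
  - right. exact (window_direction lam Hlam (eq_sym Hzero)).
Qed.

End WeakstarSeparation.

(* g is the supremum of its weak^*-continuous affine minorants; a recession
   direction from the second alternative pushes any minorant above level c. *)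
Lemma affine_minorant_above (X : Banach) (g : dual X -> ER) :
  proper g -> convex g -> weakstar_lsc g -> forall a c, ~ ER_le (g a) (Fin c) ->
  exists xh beta, (forall b r, g b = Fin r -> b xh - r <= beta) /\ c < a xh - beta.
Proof.
  intros Hprop Hconv Hlsc a c Hac.
  destruct (ER_not_le_gap _ _ Hac) as [c2 [Hcc2 Hac2]].
  destruct (Hlsc c2 a Hac2) as [l [eps [He Hnb]]].
  destruct (weakstar_minorant_or_direction X g Hprop Hconv a c2 eps l He Hnb)
    as [[xh [beta [H1 H2]]]|[xv [th [Hth Hv]]]].
  - exists xh, beta. split; auto. lra.
  - pose proof Hprop as [a1 Ha1]. unfold dom in Ha1.
    destruct (g a1) as [r1|] eqn:Er1; [|congruence].
    assert (Ha1' : ~ ER_le (g a1) (Fin (r1 - 1))) by (rewrite Er1; simpl; lra).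
    destruct (Hlsc (r1 - 1) a1 Ha1') as [l1 [eps1 [He1 Hnb1]]].
    destruct (weakstar_minorant_or_direction X g Hprop Hconv a1 (r1 - 1) eps1 l1
                He1 Hnb1) as [[x1 [b1 [H1 H2]]]|[xv' [th' [Hth' Hv']]]].
    + set (K := (Rabs (c - a x1 + b1) + 1) / th).
      assert (HK : 0 < K).
      { unfold K. apply Rdiv_lt_0_compat; [pose proof (Rabs_pos (c - a x1 + b1))|]; lra. }
      exists (vadd X x1 (vscal X (-K) xv)), (b1 - K * (a xv + th)). split.
      * intros b r Hr. rewrite dfun_add, dfun_scal.
        pose proof (H1 b r Hr). pose proof (Hv b r Hr). nra.
      * rewrite dfun_add, dfun_scal.
        replace (a x1 + - K * a xv - (b1 - K * (a xv + th))) with (a x1 - b1 + K * th) by ring.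
        unfold K. replace ((Rabs (c - a x1 + b1) + 1) / th * th) with (Rabs (c - a x1 + b1) + 1)
          by (field; lra).
        pose proof (Rle_abs (c - a x1 + b1)). lra.
    + exfalso. pose proof (Hv' a1 r1 Er1). lra.
Qed.

Section ConjugateChains.
Variable X : Banach.
Variable g : dual X -> ER.
Variable T : dual X -> X -> Prop.
Variable a0 : dual X.
Hypothesis Hprop : proper g.
Hypothesis HT : forall a x, T a x -> subdiff g a x.
Hypothesis HD : DT T a0.
Hypothesis Hminor : forall a c, ~ ER_le (g a) (Fin c) ->
  exists xh beta, (forall b r, g b = Fin r -> b xh - r <= beta) /\ c < a xh - beta.
Hypothesis Hint : exists x, X_interior (dom_conj_X g) x.
Hypothesis Hdense : X_dense_in (ImT T) (X_interior (dom_conj_X g)).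
Notation phi := (conjX X g Hprop).
Notation phival := (fval X phi).
Notation va := (vadd X). Notation vs := (vscal X). Notation vo := (vopp X).

Definition Sg_Tinv (y : X) (s : dual X) := T s y.

Lemma Sg_Tinv_subgrad y s : Sg_Tinv y s -> subgrad X phi y s.
Proof. intro H. apply subdiff_subgrad_conjX, HT, H. Qed.

Lemma Sg_Tinv_dense y : fint X phi y -> forall eta, 0 < eta ->
  exists y' s', Sg_Tinv y' s' /\ vdist y' y < eta.
Proof.
  intros Hy eta He. apply fint_conjX_iff in Hy.
  destruct (Hdense y Hy eta He) as [y' [[s' Hs'] Hy']]. exists y', s'. auto.
Qed.

Lemma interior_conjX : exists x1, fint X phi x1.
Proof. destruct Hint as [x1 Hx1]. exists x1. apply fint_conjX_iff. exact Hx1. Qed.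

(* In terms of the defect C - b y + phi y of a chain ending at (b, y), which is
   about -g a0 at the start and decreases by at most eps along the chain. *)
Lemma chain_start_conjX gam : 0 < gam ->
  exists b1 y1 C1, T b1 y1 /\ fint X phi y1 /\ chain X T a0 b1 y1 C1 /\
    - ER_fin (g a0) - gam < C1 - b1 y1 + phival y1.
Proof.
  intro Hgam. destruct interior_conjX as [x1 Hx1].
  destruct HD as [x0 Hx0].
  destruct (conjX_at_subdiff X g Hprop a0 x0 (HT _ _ Hx0)) as [u [Hu Hphix0]].
  assert (Hdx0 : fdom X phi x0) by (unfold fdom; congruence).
  assert (HFx0 : phival x0 = a0 x0 - u) by (unfold fval; rewrite Hphix0; reflexivity).
  set (e := gam / 6). assert (He : 0 < e) by (unfold e; lra).
  destruct (fint_segment_near_start X phi (fconvex_conjX X g Hprop) (flsc_conjX X g Hprop)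
              x0 x1 e Hdx0 Hx1 He) as [tau0 [Htau0 Hst]].
  set (tau := tau0 / 2).
  set (p1 := segment X x0 x1 tau). set (p2 := segment X x0 x1 (2 * tau)).
  destruct (Hst tau ltac:(unfold tau; lra)) as [Hp1i Hp1v]. fold p1 in Hp1i, Hp1v.
  destruct (Hst (2 * tau) ltac:(unfold tau; lra)) as [Hp2i Hp2v]. fold p2 in Hp2i, Hp2v.
  destruct (fint_near X phi (fconvex_conjX X g Hprop) (flsc_conjX X g Hprop) p1 e Hp1i He)
    as [d1 [Hd1 Hc1]].
  destruct (fint_continuous X phi (fconvex_conjX X g Hprop) (flsc_conjX X g Hprop) p2 Hp2i e He)
    as [d2 [Hd2 Hc2]].
  set (eta := Rmin d1 (d2 / 2)).
  assert (Heta1 : eta <= d1) by apply Rmin_l.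
  assert (Heta2 : eta <= d2 / 2) by apply Rmin_r.
  assert (Heta : 0 < eta) by (apply Rmin_glb_lt; lra).
  destruct (Sg_Tinv_dense p1 Hp1i eta Heta) as [y1 [b1 [Hs1 Hy1]]].
  destruct (Hc1 y1 ltac:(lra)) as [Hy1i Hy1v].
  (* the subgradient b1 at y1, tested at z1 = 2 y1 - x0 (near p2 = 2 p1 - x0) *)
  set (z1 := va (vs 2 y1) (vo x0)).
  assert (Hz1 : vdist z1 p2 < d2).
  { replace p2 with (va (vs 2 p1) (vo x0))
      by (unfold p2, p1, segment; vring4 x0 x1 (vzero X) (vzero X); ring).
    unfold z1. rewrite vdist_scal_add, Rabs_right by lra. lra. }
  destruct (Hc2 z1 Hz1) as [Hdz1 Hz1v].
  pose proof (subgrad_le X phi y1 b1 z1 (Sg_Tinv_subgrad _ _ Hs1) Hdz1) as Hsub.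
  unfold z1 in Hsub. rewrite dfun_add, dfun_scal, dfun_opp in Hsub. fold z1 in Hsub.
  exists b1, y1, (0 + b1 x0 - a0 x0). split; [auto|]. split; [auto|].
  split; [apply chain_extend; [apply chain_start|]; auto|].
  rewrite Hu. simpl.
  apply Rabs_def2 in Hp1v. apply Rabs_def2 in Hp2v. apply Rabs_def2 in Hy1v.
  apply Rabs_def2 in Hz1v. rewrite HFx0 in Hp1v, Hp2v. unfold e in *. lra.
Qed.

Lemma chain_along_conjX b1 y1 C1 q eps delta :
  T b1 y1 -> fint X phi y1 -> fint X phi q -> chain X T a0 b1 y1 C1 -> 0 < eps -> 0 < delta ->
  exists b y C, vdist y q < delta /\ chain X T a0 b y C /\
    C1 - b1 y1 + phival y1 - phival y - eps <= C - b y.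
Proof.
  intros Hs1 Hy1 Hq HC1 He Hd.
  destruct (Sg_chain_exists X phi (fconvex_conjX X g Hprop) (flsc_conjX X g Hprop)
              Sg_Tinv Sg_Tinv_subgrad Sg_Tinv_dense y1 b1 q eps delta Hy1 Hq Hs1 He Hd)
    as [N [ys [ss [Hys0 [Hss0 [HSk [HyN HE]]]]]]].
  pose proof (chain_sum X T a0 N ss ys C1) as Hch. rewrite Hys0, Hss0 in Hch.
  specialize (Hch HC1 HSk).
  eexists _, _, _. split; [exact HyN|]. split; [exact Hch|].
  destruct (chain_sum_sandwich X phi N ys ss (fun k Hk => Sg_Tinv_subgrad _ _ (HSk k Hk)))
    as [Hsw _].
  pose proof (dfun_telescope X ss ys N) as Htel.
  rewrite sumR_minus in HE. rewrite Hys0 in Hsw, Htel. rewrite Hss0 in Htel. lra.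
Qed.

Lemma conjX_gap_interior (a : dual X) xh beta gam : (forall b r, g b = Fin r -> b xh - r <= beta) ->
  0 < gam -> exists q, fint X phi q /\ a xh - beta - gam <= a q - phival q.
Proof.
  intros Hb Hgam. destruct interior_conjX as [x1 Hx1].
  destruct (conjX_le X g Hprop xh beta Hb) as [vh [Hvh Hvhb]].
  assert (Hdxh : fdom X phi xh) by (unfold fdom; congruence).
  assert (HFxh : phival xh = vh) by (unfold fval; rewrite Hvh; reflexivity).
  set (B := Rabs (a x1 - a xh + beta - phival x1) + 1).
  assert (HB : 0 < B) by (unfold B; pose proof (Rabs_pos (a x1 - a xh + beta - phival x1)); lra).
  set (t := Rmin 1 (gam / B)).
  assert (Ht : 0 < t <= 1).
  { split; [apply Rmin_glb_lt; [lra|apply Rdiv_lt_0_compat; lra]|apply Rmin_l]. }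
  assert (HtB : t * B <= gam).
  { apply Rle_trans with (gam / B * B); [apply Rmult_le_compat_r; [lra|apply Rmin_r]|].
    right. field. lra. }
  exists (segment X xh x1 t). split; [apply fint_segment; auto using fconvex_conjX|].
  destruct (fconvex_segment X phi (fconvex_conjX X g Hprop) xh x1 t Hdxh (fint_fdom X phi x1 Hx1)
              ltac:(lra)) as [_ Hcv].
  rewrite dfun_segment. rewrite HFxh in Hcv.
  pose proof (Rle_abs (-(a x1 - a xh + beta - phival x1))). rewrite Rabs_Ropp in H.
  assert ((1 - t) * vh <= (1 - t) * beta) by (apply Rmult_le_compat_l; lra).
  assert (t * (- (a x1 - a xh + beta - phival x1)) <= t * B)
    by (apply Rmult_le_compat_l; unfold B; lra).
  nra.
Qed.

Lemma conjX_target a M : ~ ER_le (g a) (Fin M) ->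
  exists q delta, fint X phi q /\ 0 < delta /\
    forall y, vdist y q < delta -> M < a y - phival y.
Proof.
  intro HM. destruct (Hminor a M HM) as [xh [beta [Hb Hbeta]]].
  set (gam := (a xh - beta - M) / 4). assert (Hgam : 0 < gam) by (unfold gam; lra).
  destruct (conjX_gap_interior a xh beta gam Hb Hgam) as [q [Hqi Hqv]].
  destruct (fint_continuous X phi (fconvex_conjX X g Hprop) (flsc_conjX X g Hprop) q Hqi gam Hgam)
    as [d3 [Hd3 Hc3]].
  destruct (dfun_lipschitz X a) as [Ka [HKa HKab]].
  exists q, (Rmin d3 (gam / Ka)). split; [auto|].
  split; [apply Rmin_glb_lt; [lra|apply Rdiv_lt_0_compat; lra]|].
  intros y Hy.
  destruct (Hc3 y ltac:(eapply Rlt_le_trans; [exact Hy|apply Rmin_l])) as [_ Hyv].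
  assert (HaN : Rabs (a y - a q) < gam).
  { eapply Rle_lt_trans; [apply HKab|].
    apply (Rmult_lt_reg_l (/Ka)); [apply Rinv_0_lt_compat; lra|].
    rewrite <- Rmult_assoc, Rinv_l, Rmult_1_l, Rmult_comm by lra.
    eapply Rlt_le_trans; [exact Hy|apply Rmin_r]. }
  apply Rabs_def2 in Hyv. apply Rabs_def2 in HaN. unfold gam in *. lra.
Qed.

Lemma hset_sup_conjX a : ER_sup (hset T a0 a) (ER_minus (g a) (g a0)).
Proof.
  destruct HD as [x0 Hx0]. assert (Ha0 : dom g a0) by apply (HT _ _ Hx0).
  apply ER_sup_intro; [intros r Hr; apply (hset_le X T a0 g HT a r Hr Ha0)|].
  intros c Hc.
  assert (Hc' : ~ ER_le (g a) (Fin (c + ER_fin (g a0)))).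
  { unfold dom in Ha0. destruct (g a0); [|congruence]. destruct (g a); simpl in *; auto. lra. }
  destruct (ER_not_le_gap _ _ Hc') as [M [HcM HM]].
  set (gam := (M - c - ER_fin (g a0)) / 3). assert (Hgam : 0 < gam) by (unfold gam; lra).
  destruct (conjX_target a M HM) as [q [delta [Hq [Hdelta Hqa]]]].
  destruct (chain_start_conjX gam Hgam) as [b1 [y1 [C1 [Hs1 [Hy1 [HC1 HC1v]]]]]].
  destruct (chain_along_conjX b1 y1 C1 q gam delta Hs1 Hy1 Hq HC1 Hgam Hdelta)
    as [b [y [C [Hy [HC HCv]]]]].
  exists (C + a y - b y). split; [apply chain_hset; auto|].
  specialize (Hqa y Hy). unfold gam in *. lra.
Qed.

End ConjugateChains.

Theorem mainTheorem11 (X : Banach) (g : dual X -> ER) (T : dual X -> X -> Prop)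
  (a0 : dual X) :
  proper g -> convex g -> weakstar_lsc g ->
  (forall a x, T a x -> subdiff g a x) ->
  DT T a0 ->
  ((exists a, dual_interior (dom g) a) ->
   dual_dense_in (DT T) (dual_interior (dom g)) ->
   forall a, dom g a -> ER_sup (hset T a0 a) (ER_minus (g a) (g a0))) /\
  ((exists x, X_interior (dom_conj_X g) x) ->
   X_dense_in (ImT T) (X_interior (dom_conj_X g)) ->
   forall a, ER_sup (hset T a0 a) (ER_minus (g a) (g a0))).
Proof.
  intros Hprop Hconv Hlsc HT HD. split.
  - intros Hint Hdense. exact (hset_sup_dual X g T a0 Hconv Hlsc HT HD Hint Hdense).
  - intros Hint Hdense.
    exact (hset_sup_conjX X g T a0 Hprop HT HD
             (affine_minorant_above X g Hprop Hconv Hlsc) Hint Hdense).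
Qed.
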